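(* Let $E$ be a Banach space, $\Omega\subset\mathbb{R}^d$ open, $k\in\mathbb{N}_0$ and $0<\gamma\le1$. Let $(f_\iota)_{\iota\in I}$ be a bounded net in $\mathcal{C}^{k,\gamma}_{loc}(\Omega,E)$, and suppose either (i) $\lim_\iota f_\iota(x)$ exists for all $x$ in a dense subset $U\subset\Omega$, or (ii) $k\ge1$, $\Omega$ is connected, $\lim_\iota(\partial^{e_n})^Ef_\iota(x)$ exists for all $1\le n\le d$ and all $x$ in a dense subset $U\subset\Omega$, and there is $x_0\in\Omega$ such that $\lim_\iota f_\iota(x_0)$ exists. Then there is $f\in\mathcal{C}^{k,\gamma}_{loc}(\Omega,E)$ such that $(f_\iota)_{\iota\in I}$ converges to $f$ in $(\mathcal{C}^k(\Omega,E),\tau_{\mathcal{C}^k})$.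
   Context: $E$ is a Banach space over $\mathbb{K}\in\{\mathbb{R},\mathbb{C}\}$ with norm $\|\cdot\|$. $\mathcal{C}^{k,\gamma}_{loc}(\Omega,E)$ is the space of $k$-times continuously partially differentiable $f\colon\Omega\to E$ such that for each compact $K\subset\Omega$ the seminorm $|f|_K:=\max\bigl(\sup_{x\in K,|\beta|\le k}\|(\partial^\beta)^Ef(x)\|,\ \sup_{|\beta|=k}\sup_{x\ne y\in K}\frac{\|(\partial^\beta)^Ef(x)-(\partial^\beta)^Ef(y)\|}{|x-y|^\gamma}\bigr)$ is finite; a net is bounded if $\sup_\iota|f_\iota|_K<\infty$ for every compact $K$. $\tau_{\mathcal{C}^k}$ is the topology of uniform convergence of all partial derivatives of order $\le k$ on compact subsets of $\Omega$ (seminorms $\sup_{x\in K,|\beta|\le m}\|(\partial^\beta)^Ef(x)\|$, $K$ compact, $m\le k$). *)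

From Stdlib Require Import Reals Lra List Classical ClassicalEpsilon.
Open Scope R_scope.

Record Banach := MkBanach {
  bcar :> Type;
  bzero : bcar;
  badd : bcar -> bcar -> bcar;
  bopp : bcar -> bcar;
  bscal : R -> bcar -> bcar;
  bnorm : bcar -> R;
  baddA : forall x y z, badd x (badd y z) = badd (badd x y) z;
  baddC : forall x y, badd x y = badd y x;
  badd0 : forall x, badd x bzero = x;
  baddN : forall x, badd x (bopp x) = bzero;
  bscalA : forall a b x, bscal a (bscal b x) = bscal (a * b) x;
  bscal1 : forall x, bscal 1 x = x;
  bscalDr : forall a x y, bscal a (badd x y) = badd (bscal a x) (bscal a y);
  bscalDl : forall a b x, bscal (a + b) x = badd (bscal a x) (bscal b x);
  bnorm_eq0 : forall x, bnorm x = 0 -> x = bzero;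
  bnorm_scal : forall a x, bnorm (bscal a x) = Rabs a * bnorm x;
  bnorm_tri : forall x y, bnorm (badd x y) <= bnorm x + bnorm y;
  bcomplete : forall u : nat -> bcar,
    (forall eps, eps > 0 -> exists N, forall m n, (N <= m)%nat -> (N <= n)%nat ->
        bnorm (badd (u m) (bopp (u n))) < eps) ->
    exists L, forall eps, eps > 0 -> exists N, forall n, (N <= n)%nat ->
        bnorm (badd (u n) (bopp L)) < eps
}.

Definition bsub (E : Banach) (x y : E) : E := badd E x (bopp E y).

(* ---------- R^d : points are nat -> R vanishing at coordinates >= d ---------- *)
Definition inRd (d : nat) (x : nat -> R) : Prop := forall i, (d <= i)%nat -> x i = 0.

Fixpoint sumsq (d : nat) (x : nat -> R) : R :=
  match d with O => 0 | S d' => sumsq d' x + x d' * x d' end.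

Definition dist (d : nat) (x y : nat -> R) : R := sqrt (sumsq d (fun i => x i - y i)).

Definition openRd (d : nat) (O : (nat -> R) -> Prop) : Prop :=
  forall x, O x -> inRd d x /\
    exists r, r > 0 /\ forall y, inRd d y -> dist d x y < r -> O y.

Definition compactRd (d : nat) (K : (nat -> R) -> Prop) : Prop :=
  (forall x, K x -> inRd d x) /\
  forall (J : Type) (O : J -> (nat -> R) -> Prop),
    (forall j, openRd d (O j)) -> (forall x, K x -> exists j, O j x) ->
    exists l : list J, forall x, K x -> exists j, In j l /\ O j x.

Definition compact_in (d : nat) (Om K : (nat -> R) -> Prop) : Prop :=
  compactRd d K /\ forall x, K x -> Om x.

Definition connectedRd (d : nat) (Om : (nat -> R) -> Prop) : Prop :=
  forall A B : (nat -> R) -> Prop, openRd d A -> openRd d B ->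
    (forall x, Om x -> A x \/ B x) ->
    (forall x, Om x -> A x -> B x -> False) ->
    (exists x, Om x /\ A x) -> (exists x, Om x /\ B x) -> False.

Definition dense_in (d : nat) (Om U : (nat -> R) -> Prop) : Prop :=
  (forall x, U x -> Om x) /\
  forall x, Om x -> forall r, r > 0 -> exists u, U u /\ dist d x u < r.

Definition shift (n : nat) (t : R) (x : nat -> R) : nat -> R :=
  fun i => if Nat.eqb i n then x i + t else x i.

Definition is_pderiv (E : Banach) (n : nat) (g : (nat -> R) -> E) (x : nat -> R) (v : E) : Prop :=
  forall eps, eps > 0 -> exists delta, delta > 0 /\ forall t, t <> 0 -> Rabs t < delta ->
    bnorm E (bsub E (bscal E (/ t) (bsub E (g (shift n t x)) (g x))) v) < eps.

(* the partial derivative (a junk value where it does not exist) *)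
Definition pd (E : Banach) (n : nat) (g : (nat -> R) -> E) : (nat -> R) -> E :=
  fun x => epsilon (inhabits (bzero E)) (is_pderiv E n g x).

Fixpoint iterd (E : Banach) (l : list nat) (g : (nat -> R) -> E) : (nat -> R) -> E :=
  match l with nil => g | n :: l' => pd E n (iterd E l' g) end.

(* multi-index beta (only its first d entries matter) *)
Fixpoint mlist (beta : nat -> nat) (d : nat) : list nat :=
  match d with O => nil | S d' => mlist beta d' ++ repeat d' (beta d') end.

Fixpoint morder (beta : nat -> nat) (d : nat) : nat :=
  match d with O => O | S d' => (morder beta d' + beta d')%nat end.

Definition dpart (E : Banach) (d : nat) (beta : nat -> nat) (g : (nat -> R) -> E) :=
  iterd E (mlist beta d) g.

Definition contOn (E : Banach) (d : nat) (Om : (nat -> R) -> Prop) (g : (nat -> R) -> E) : Prop :=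
  forall x, Om x -> forall eps, eps > 0 -> exists delta, delta > 0 /\
    forall y, Om y -> dist d x y < delta -> bnorm E (bsub E (g y) (g x)) < eps.

Definition Ck (E : Banach) (d : nat) (Om : (nat -> R) -> Prop) (k : nat) (g : (nat -> R) -> E) : Prop :=
  (forall l : list nat, Forall (fun n => (n < d)%nat) l -> (length l < k)%nat ->
     forall n, (n < d)%nat -> forall x, Om x -> exists v, is_pderiv E n (iterd E l g) x v) /\
  (forall l : list nat, Forall (fun n => (n < d)%nat) l -> (length l <= k)%nat ->
     contOn E d Om (iterd E l g)).

(* |g|_K <= M  (the C^{k,gamma} seminorm on K is bounded by M) *)
Definition holder_bound (E : Banach) (d k : nat) (gamma : R) (K : (nat -> R) -> Prop)
    (g : (nat -> R) -> E) (M : R) : Prop :=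
  (forall beta x, (morder beta d <= k)%nat -> K x -> bnorm E (dpart E d beta g x) <= M) /\
  (forall beta x y, morder beta d = k -> K x -> K y -> x <> y ->
     bnorm E (bsub E (dpart E d beta g x) (dpart E d beta g y)) / Rpower (dist d x y) gamma <= M).

Definition Ckg_loc (E : Banach) (d : nat) (Om : (nat -> R) -> Prop) (k : nat) (gamma : R)
    (g : (nat -> R) -> E) : Prop :=
  Ck E d Om k g /\
  forall K, compact_in d Om K -> exists M, holder_bound E d k gamma K g M.

Definition directed (I : Type) (le : I -> I -> Prop) : Prop :=
  inhabited I /\ (forall i, le i i) /\ (forall i j l, le i j -> le j l -> le i l) /\
  (forall i j, exists l, le i l /\ le j l).

Definition net_lim (E : Banach) (I : Type) (le : I -> I -> Prop) (u : I -> E) (L : E) : Prop :=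
  forall eps, eps > 0 -> exists i0, forall i, le i0 i -> bnorm E (bsub E (u i) L) < eps.

Definition bounded_net (E : Banach) (d : nat) (Om : (nat -> R) -> Prop) (k : nat) (gamma : R)
    (I : Type) (F : I -> (nat -> R) -> E) : Prop :=
  (forall i, Ckg_loc E d Om k gamma (F i)) /\
  forall K, compact_in d Om K -> exists M, forall i, holder_bound E d k gamma K (F i) M.

Definition conv_Ck (E : Banach) (d : nat) (Om : (nat -> R) -> Prop) (k : nat)
    (I : Type) (le : I -> I -> Prop) (F : I -> (nat -> R) -> E) (f : (nat -> R) -> E) : Prop :=
  forall K, compact_in d Om K -> forall eps, eps > 0 -> exists i0, forall i, le i0 i ->
    forall beta x, (morder beta d <= k)%nat -> K x ->
      bnorm E (dpart E d beta (fun y => bsub E (F i y) (f y)) x) <= eps.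

(* Boundedness of the C^{k,gamma} seminorms on compact sets makes the derivatives of order at
   most k equicontinuous on small cubes, uniformly in the net: those of order k by the Hoelder
   bound, lower ones by the mean value inequality along axis-parallel paths.  Equicontinuity
   spreads pointwise Cauchyness from the dense set U to all of Omega.  Under (ii), Cauchyness of
   the first derivatives and the mean value inequality transfer Cauchyness of the net from a
   point to a cube around it, and connectedness carries it from x0 to all of Omega.  Difference
   quotients with a fixed step are then Cauchy, so every derivative of order at most k converges
   pointwise in the Banach space E; uniformity of the difference quotient estimate makes the limit
   of the derivatives the derivative of the limit f, which inherits the seminorm bounds, and a
   finite cover of a compact set by cubes upgrades pointwise to uniform convergence.  Schwarz's
   theorem identifies iterated derivatives in any order with the multi-index derivatives. *)

From Stdlib Require Import Reals Lra List Permutation Classical ClassicalEpsilon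
  FunctionalExtensionality PropExtensionality Lia ZArith.
Open Scope R_scope.

Arguments bzero {_}. Arguments badd {_}. Arguments bopp {_}. Arguments bscal {_}.
Arguments bnorm {_}. Arguments bsub {_}.
Arguments baddA {_}. Arguments baddC {_}. Arguments badd0 {_}. Arguments baddN {_}.
Arguments bscalA {_}. Arguments bscal1 {_}. Arguments bscalDr {_}. Arguments bscalDl {_}.
Arguments bnorm_eq0 {_}. Arguments bnorm_scal {_}. Arguments bnorm_tri {_}.

Section BanachAlgebra.
Context {E : Banach}.
Implicit Types (x y z : E) (a b : R).

Lemma badd0l x : badd bzero x = x.
Proof. rewrite baddC; apply badd0. Qed.

Lemma baddNl x : badd (bopp x) x = bzero.
Proof. rewrite baddC; apply baddN. Qed.

Lemma baddI x y z : badd x y = badd x z -> y = z.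
Proof.
  intro H. rewrite <- (badd0l y), <- (badd0l z), <- (baddNl x), <- !baddA, H.
  reflexivity.
Qed.

Lemma bscal0l x : bscal 0 x = bzero.
Proof. apply (baddI (bscal 0 x)). rewrite badd0, <- bscalDl. f_equal. lra. Qed.

Lemma bscal0r a : bscal a (@bzero E) = bzero.
Proof. apply (baddI (bscal a bzero)). rewrite badd0, <- bscalDr, badd0. reflexivity. Qed.

Lemma bopp_unique x y : badd x y = bzero -> y = bopp x.
Proof. intro H. apply (baddI x). rewrite H, baddN. reflexivity. Qed.

Lemma boppE x : bopp x = bscal (-1) x.
Proof.
  symmetry; apply bopp_unique. rewrite <- (bscal1 x) at 1. rewrite <- bscalDl.
  replace (1 + -1) with 0 by lra. apply bscal0l.
Qed.

Lemma boppD x y : bopp (badd x y) = badd (bopp x) (bopp y).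
Proof. rewrite !boppE. apply bscalDr. Qed.

Lemma boppK x : bopp (bopp x) = x.
Proof. rewrite !boppE, bscalA. replace (-1 * -1) with 1 by lra. apply bscal1. Qed.

Lemma bopp0 : bopp (@bzero E) = bzero.
Proof. rewrite boppE. apply bscal0r. Qed.

Lemma bscalNr a x : bscal a (bopp x) = bopp (bscal a x).
Proof. rewrite !boppE, !bscalA. f_equal. ring. Qed.

Lemma bscalNl a x : bscal (- a) x = bopp (bscal a x).
Proof. rewrite !boppE, !bscalA. f_equal. ring. Qed.

Lemma bsubxx x : bsub x x = bzero.
Proof. apply baddN. Qed.

Lemma bsubr0 x : bsub x bzero = x.
Proof. unfold bsub. rewrite bopp0. apply badd0. Qed.

Lemma bsub_eq0 x y : bsub x y = bzero -> x = y.
Proof.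
  unfold bsub; intro H. pose proof (bopp_unique _ _ H) as H0.
  rewrite <- (boppK x), <- (boppK y), H0. reflexivity.
Qed.

Lemma bsub_add_sub x y z : badd (bsub x y) (bsub y z) = bsub x z.
Proof. unfold bsub. rewrite <- baddA. f_equal. rewrite baddA, baddNl. apply badd0l. Qed.

Lemma bsubACA x y z w : bsub (bsub x y) (bsub z w) = bsub (bsub x z) (bsub y w).
Proof.
  unfold bsub. rewrite !boppD, !boppK, <- !baddA. f_equal.
  rewrite !baddA. f_equal. apply baddC.
Qed.

Lemma bscal_subr a x y : bscal a (bsub x y) = bsub (bscal a x) (bscal a y).
Proof. unfold bsub. rewrite bscalDr, bscalNr. reflexivity. Qed.

Lemma bscal_subl a b x : bscal (a - b) x = bsub (bscal a x) (bscal b x).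
Proof. unfold bsub, Rminus. rewrite bscalDl, bscalNl. reflexivity. Qed.

Lemma bnorm0 : bnorm (@bzero E) = 0.
Proof. rewrite <- (bscal0l bzero), bnorm_scal, Rabs_R0. ring. Qed.

Lemma bnormN x : bnorm (bopp x) = bnorm x.
Proof.
  rewrite boppE, bnorm_scal. replace (Rabs (-1)) with 1 by (rewrite Rabs_left; lra). ring.
Qed.

Lemma bnorm_ge0 x : 0 <= bnorm x.
Proof. pose proof (bnorm_tri x (bopp x)) as H. rewrite baddN, bnorm0, bnormN in H. lra. Qed.

Lemma bnorm_subC x y : bnorm (bsub x y) = bnorm (bsub y x).
Proof. rewrite <- bnormN. f_equal. unfold bsub. rewrite boppD, boppK. apply baddC. Qed.

Lemma bnorm_sub_tri x y z : bnorm (bsub x z) <= bnorm (bsub x y) + bnorm (bsub y z).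
Proof. rewrite <- (bsub_add_sub x y z). apply bnorm_tri. Qed.

Lemma bnorm_sub_le x y : bnorm (bsub x y) <= bnorm x + bnorm y.
Proof. unfold bsub. rewrite <- (bnormN y). apply bnorm_tri. Qed.

Lemma bnorm_le_sub x y : bnorm x <= bnorm (bsub x y) + bnorm y.
Proof. pose proof (bnorm_sub_tri x y bzero). rewrite !bsubr0 in H. exact H. Qed.

Lemma bsub_small_eq x y : (forall eps, eps > 0 -> bnorm (bsub x y) <= eps) -> x = y.
Proof.
  intro H. apply bsub_eq0, bnorm_eq0. pose proof (bnorm_ge0 (bsub x y)).
  destruct (Req_dec (bnorm (bsub x y)) 0) as [h|h]; auto.
  specialize (H (bnorm (bsub x y) / 2) ltac:(lra)). lra.
Qed.

Lemma bnorm_scal_quot t x c : t <> 0 ->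
  bnorm (bsub (bscal (/ t) x) c) = Rabs (/ t) * bnorm (bsub x (bscal t c)).
Proof.
  intro ht. rewrite <- bnorm_scal. f_equal.
  rewrite bscal_subr, bscalA, Rinv_l, bscal1 by auto. reflexivity.
Qed.

Lemma bnorm_telescope (u : nat -> E) C n :
  (forall m, (m < n)%nat -> bnorm (bsub (u (S m)) (u m)) <= C) ->
  bnorm (bsub (u n) (u 0%nat)) <= INR n * C.
Proof.
  induction n as [|n IH]; intros H; [simpl; rewrite bsubxx, bnorm0; lra|].
  pose proof (H n (Nat.lt_succ_diag_r n)). specialize (IH ltac:(intros; apply H; lia)).
  pose proof (bnorm_sub_tri (u (S n)) (u n) (u 0%nat)). rewrite S_INR. lra.
Qed.

End BanachAlgebra.

Lemma Rle_forall_eps a b : (forall eps, eps > 0 -> a <= b + eps) -> a <= b.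
Proof. intro H. destruct (Rle_dec a b); auto. specialize (H ((a - b) / 2)). lra. Qed.

Lemma inv_INR_small eps : eps > 0 -> exists N : nat, / (INR N + 1) < eps.
Proof.
  intro he. destruct (archimed (/ eps)) as [h1 _].
  assert (0 <= IZR (up (/ eps))) by (pose proof (Rinv_0_lt_compat _ he); lra).
  exists (Z.to_nat (up (/ eps))). rewrite INR_IZR_INZ, Z2Nat.id by (apply le_IZR; auto).
  apply Rlt_le_trans with (/ (/ eps)).
  - apply Rinv_lt_contravar; [apply Rmult_lt_0_compat; [apply Rinv_0_lt_compat|]|]; lra.
  - rewrite Rinv_inv. lra.
Qed.

Lemma INR_unbounded a : exists m : nat, a < INR m.
Proof.
  destruct (archimed (Rabs a)) as [h1 _].
  assert (0 <= IZR (up (Rabs a))) by (pose proof (Rabs_pos a); lra).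
  exists (Z.to_nat (up (Rabs a))). rewrite INR_IZR_INZ, Z2Nat.id by (apply le_IZR; auto).
  pose proof (Rle_abs a). lra.
Qed.

Lemma shift_shift n s t x : shift n s (shift n t x) = shift n (t + s) x.
Proof. apply functional_extensionality; intro i. unfold shift. destruct (Nat.eqb i n); lra. Qed.

Lemma shiftC a b s t x : shift a s (shift b t x) = shift b t (shift a s x).
Proof.
  apply functional_extensionality; intro i. unfold shift.
  destruct (Nat.eqb i a), (Nat.eqb i b); lra.
Qed.

Lemma shift0 n x : shift n 0 x = x.
Proof. apply functional_extensionality; intro i. unfold shift. destruct (Nat.eqb i n); lra. Qed.

Lemma shift_at n t x : shift n t x n = x n + t.
Proof. unfold shift. rewrite Nat.eqb_refl. reflexivity. Qed.

Lemma shift_other n t x i : i <> n -> shift n t x i = x i.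
Proof. intro h. unfold shift. apply Nat.eqb_neq in h. rewrite h. reflexivity. Qed.

Lemma inRd_shift d n t x : (n < d)%nat -> inRd d x -> inRd d (shift n t x).
Proof. intros hn hx i hi. rewrite shift_other by lia. apply hx; auto. Qed.

Lemma sumsq_ext d f g : (forall i, (i < d)%nat -> f i = g i) -> sumsq d f = sumsq d g.
Proof.
  induction d; simpl; intros; auto.
  rewrite IHd by (intros; apply H; lia). rewrite H by lia. reflexivity.
Qed.

Lemma sumsq_ge0 d f : 0 <= sumsq d f.
Proof. induction d; simpl; [lra|]. pose proof (Rle_0_sqr (f d)). unfold Rsqr in *. lra. Qed.

Lemma sumsq0 d : sumsq d (fun _ => 0) = 0.
Proof. induction d; simpl; auto. rewrite IHd. ring. Qed.

Lemma sumsq_coord d f i : (i < d)%nat -> f i * f i <= sumsq d f.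
Proof.
  induction d; intros; [lia|]. simpl. pose proof (sumsq_ge0 d f).
  pose proof (Rle_0_sqr (f d)); unfold Rsqr in *.
  destruct (Nat.eq_dec i d); [subst; lra|]. specialize (IHd ltac:(lia)). lra.
Qed.

Lemma dist_ge0 d x y : 0 <= dist d x y.
Proof. apply sqrt_pos. Qed.

Lemma distC d x y : dist d x y = dist d y x.
Proof. unfold dist. f_equal. induction d; simpl; auto. rewrite IHd. ring. Qed.

Lemma coord_le_dist d x y i : (i < d)%nat -> Rabs (x i - y i) <= dist d x y.
Proof.
  intro hi. unfold dist. rewrite <- sqrt_Rsqr_abs. apply sqrt_le_1_alt.
  apply (sumsq_coord d (fun i => x i - y i)); auto.
Qed.

Lemma dist_shift d n t x : (n < d)%nat -> dist d x (shift n t x) = Rabs t.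
Proof.
  intro hn. unfold dist. induction d; [lia|]. simpl. destruct (Nat.eq_dec n d).
  - subst. rewrite (sumsq_ext d _ (fun _ => 0)), sumsq0.
    2:{ intros. rewrite shift_other by lia. ring. }
    rewrite shift_at. replace (0 + (x d - (x d + t)) * (x d - (x d + t))) with (t * t) by ring.
    apply sqrt_Rsqr_abs.
  - rewrite shift_other by auto. replace (x d - x d) with 0 by ring.
    rewrite Rmult_0_l, Rplus_0_r. apply IHd. lia.
Qed.

Lemma dist_gt0 d x y : inRd d x -> inRd d y -> x <> y -> 0 < dist d x y.
Proof.
  intros hx hy hne. destruct (dist_ge0 d x y) as [|H]; auto. exfalso. apply hne.
  apply functional_extensionality; intro i. destruct (Nat.lt_ge_cases i d).
  - pose proof (coord_le_dist d x y i H0). rewrite <- H in H1.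
    pose proof (Rabs_pos (x i - y i)).
    destruct (Req_dec (x i - y i) 0); [lra|]. apply Rabs_no_R0 in H3. lra.
  - rewrite hx, hy; auto.
Qed.

Fixpoint sumabs (d : nat) (v : nat -> R) : R :=
  match d with O => 0 | S d' => sumabs d' v + Rabs (v d') end.

Lemma sumabs_ge0 d v : 0 <= sumabs d v.
Proof. induction d; simpl; [lra|]. pose proof (Rabs_pos (v d)); lra. Qed.

Lemma sumabs_le d v r : (forall i, (i < d)%nat -> Rabs (v i) <= r) -> sumabs d v <= INR d * r.
Proof.
  induction d; intros H; simpl sumabs; [simpl; lra|]. rewrite S_INR.
  assert (sumabs d v <= INR d * r) by (apply IHd; intros; apply H; lia).
  specialize (H d (Nat.lt_succ_diag_r d)). lra.
Qed.

Lemma sumabs_le_dist d y z : sumabs d (fun i => z i - y i) <= INR d * dist d y z.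
Proof. apply sumabs_le. intros i hi. rewrite Rabs_minus_sym. apply coord_le_dist; auto. Qed.

Lemma sqrt_sumsq_le_sumabs d v : sqrt (sumsq d v) <= sumabs d v.
Proof.
  induction d; simpl; [rewrite sqrt_0; lra|].
  pose proof (sumabs_ge0 d v). pose proof (Rabs_pos (v d)). pose proof (sumsq_ge0 d v).
  assert (hsq : v d * v d = Rabs (v d) * Rabs (v d)).
  { rewrite <- Rabs_mult, Rabs_right; auto. pose proof (Rle_0_sqr (v d)); unfold Rsqr in *; lra. }
  assert (sumsq d v <= sumabs d v * sumabs d v).
  { apply Rsqr_incr_1 in IHd; [|apply sqrt_pos|auto]. rewrite Rsqr_sqrt in IHd; auto. }
  apply Rsqr_incr_0_var; [|lra].
  rewrite Rsqr_sqrt by (pose proof (Rle_0_sqr (v d)); unfold Rsqr in *; lra).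
  unfold Rsqr. nra.
Qed.

(* Cubes rather than balls: they contain the axis-parallel paths between any two of their points. *)
Definition cube d (x : nat -> R) r (y : nat -> R) : Prop :=
  inRd d y /\ forall i, (i < d)%nat -> Rabs (y i - x i) < r.

Lemma cube_dist d x r y : cube d x r y -> dist d x y <= INR d * r.
Proof.
  intros [_ h]. unfold dist. eapply Rle_trans; [apply sqrt_sumsq_le_sumabs|].
  apply sumabs_le. intros. rewrite Rabs_minus_sym. left; auto.
Qed.

Lemma cube_of_dist d x r y : inRd d y -> dist d x y < r -> cube d x r y.
Proof.
  intros hy h. split; auto. intros i hi. rewrite Rabs_minus_sym.
  eapply Rle_lt_trans; [apply (coord_le_dist d); auto| exact h].
Qed.

Lemma cube_center d x r : inRd d x -> r > 0 -> cube d x r x.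
Proof. intros. split; auto. intros. replace (x i - x i) with 0 by ring. rewrite Rabs_R0; lra. Qed.

Lemma cube_le d x r r' y : r <= r' -> cube d x r y -> cube d x r' y.
Proof. intros h [a b]. split; auto. intros i hi. specialize (b i hi). lra. Qed.

Lemma cube_shift d x r y n s : (n < d)%nat -> cube d x r y -> Rabs (y n + s - x n) < r ->
  cube d x r (shift n s y).
Proof.
  intros hn [hy hc] hs. split; [apply inRd_shift; auto|].
  intros i hi. destruct (Nat.eq_dec i n); [subst; rewrite shift_at; auto|].
  rewrite shift_other; auto.
Qed.

Lemma cube_shift_center d x r n s : (n < d)%nat -> inRd d x -> Rabs s < r ->
  cube d x r (shift n s x).
Proof.
  intros hn hx hs. apply cube_shift; auto; [apply cube_center; auto; pose proof (Rabs_pos s); lra|].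
  replace (x n + s - x n) with s by ring. auto.
Qed.

Lemma cube_in_ball d x rho y : inRd d x -> rho > 0 ->
  cube d x (rho / (INR d + 1)) y -> dist d x y < rho.
Proof.
  intros hx hrho hy. pose proof (pos_INR d). eapply Rle_lt_trans; [apply cube_dist; eauto|].
  assert (rho = (rho / (INR d + 1)) * (INR d + 1)) by (field; lra).
  assert (0 < rho / (INR d + 1)) by (apply Rdiv_lt_0_compat; lra).
  set (q := rho / (INR d + 1)) in *. nra.
Qed.

Lemma fin_min d (a : nat -> R) : (forall i, (i < d)%nat -> 0 < a i) ->
  exists m, 0 < m /\ forall i, (i < d)%nat -> m <= a i.
Proof.
  induction d; intros H; [exists 1; split; [lra|intros; lia]|].
  destruct IHd as [m [hm hm']]; [intros; apply H; lia|].
  exists (Rmin m (a d)). split; [apply Rmin_pos; auto|].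
  intros i hi. destruct (Nat.eq_dec i d); [subst; apply Rmin_r|].
  eapply Rle_trans; [apply Rmin_l| apply hm'; lia].
Qed.

Lemma cube_open d x r : openRd d (cube d x r).
Proof.
  intros y [hy hc]. split; auto.
  destruct (fin_min d (fun i => r - Rabs (y i - x i))) as [m [hm hm']].
  { intros. specialize (hc i H). lra. }
  exists m. split; auto. intros z hz hd. split; auto. intros i hi.
  specialize (hm' i hi). pose proof (coord_le_dist d y z i hi).
  replace (z i - x i) with ((z i - y i) + (y i - x i)) by ring.
  eapply Rle_lt_trans; [apply Rabs_triang|]. rewrite Rabs_minus_sym. lra.
Qed.

Lemma open_cube d O x : openRd d O -> O x -> exists r, r > 0 /\ forall y, cube d x r y -> O y.
Proof.
  intros hO hx. destruct (hO x hx) as [hxd [R [hR hR']]].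
  exists (R / (INR d + 1)). pose proof (pos_INR d).
  split; [apply Rdiv_lt_0_compat; lra|].
  intros y hy. apply hR'; [apply hy| apply cube_in_ball; auto].
Qed.

Lemma connected_locally_constant d O (P : (nat -> R) -> Prop) : openRd d O -> connectedRd d O ->
  (forall x, O x -> exists r, r > 0 /\ forall y, cube d x r y -> O y /\ (P y <-> P x)) ->
  forall x z, O x -> O z -> P x -> P z.
Proof.
  intros hO hconn hloc x0 z hx0 hz hPx0. apply NNPP. intro hPz.
  set (A := fun y => exists x r, (forall w, cube d x r w -> O w /\ P w) /\ cube d x r y).
  set (B := fun y => exists x r, (forall w, cube d x r w -> O w /\ ~ P w) /\ cube d x r y).
  assert (hopen : forall Q : (nat -> R) -> Prop,
    openRd d (fun y => exists x r, (forall w, cube d x r w -> O w /\ Q w) /\ cube d x r y)).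
  { intros Q y [x [r [h1 h2]]]. destruct (cube_open d x r y h2) as [hyd [rr [hrr H]]].
    split; auto. exists rr. split; auto. intros w hw hdw. exists x, r. split; auto. }
  assert (hcube : forall x, O x -> exists r, cube d x r x /\
    forall w, cube d x r w -> O w /\ (P w <-> P x)).
  { intros x hx. destruct (hloc x hx) as [r [hr H]]. exists r. split; auto.
    apply cube_center; auto. apply (hO x hx). }
  apply (hconn A B (hopen P) (hopen (fun w => ~ P w))).
  - intros y hy. destruct (hcube y hy) as [r [hyy H]]. destruct (classic (P y)) as [hP|hP];
      [left|right]; exists y, r; split; auto; intros w hw; destruct (H w hw); tauto.
  - intros y _ [x1 [r1 [h1 hy1]]] [x2 [r2 [h2 hy2]]].
    apply (proj2 (h2 y hy2)), (proj2 (h1 y hy1)).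
  - destruct (hcube x0 hx0) as [r [hxx H]]. exists x0. split; auto. exists x0, r.
    split; auto. intros w hw. destruct (H w hw). tauto.
  - destruct (hcube z hz) as [r [hzz H]]. exists z. split; auto. exists z, r.
    split; auto. intros w hw. destruct (H w hw). tauto.
Qed.

Section PartialDerivatives.
Context {E : Banach}.
Implicit Types (g h : (nat -> R) -> E) (x : nat -> R) (v w : E).

Lemma is_pderiv_unique n g x v w : is_pderiv E n g x v -> is_pderiv E n g x w -> v = w.
Proof.
  intros hv hw. apply bsub_small_eq. intros e he.
  destruct (hv (e/2)) as [d1 [hd1 h1]]; [lra|]. destruct (hw (e/2)) as [d2 [hd2 h2]]; [lra|].
  set (t := Rmin d1 d2 / 2). assert (0 < Rmin d1 d2) by (apply Rmin_pos; auto).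
  assert (Rabs t < d1 /\ Rabs t < d2).
  { unfold t. rewrite Rabs_right by lra. pose proof (Rmin_l d1 d2). pose proof (Rmin_r d1 d2). lra. }
  assert (ht : t <> 0) by (unfold t; lra).
  specialize (h1 t ht (proj1 H0)). specialize (h2 t ht (proj2 H0)).
  set (q := bscal (/ t) (bsub (g (shift n t x)) (g x))) in *.
  pose proof (bnorm_sub_tri v q w). rewrite (bnorm_subC v q) in H1. lra.
Qed.

Lemma pd_eq n g x v : is_pderiv E n g x v -> pd E n g x = v.
Proof.
  intro h. apply (is_pderiv_unique n g x); auto.
  unfold pd. apply epsilon_spec. exists v; auto.
Qed.

Lemma pdP n g x : (exists v, is_pderiv E n g x v) -> is_pderiv E n g x (pd E n g x).
Proof. intros [v h]. rewrite (pd_eq n g x v h). auto. Qed.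

Lemma is_pderiv_local d O n g h x v : openRd d O -> O x -> (n < d)%nat ->
  (forall y, O y -> g y = h y) -> is_pderiv E n g x v -> is_pderiv E n h x v.
Proof.
  intros hO hx hn hgh H e he. destruct (H e he) as [dl [hdl H1]].
  destruct (hO x hx) as [hxr [r [hr hr']]].
  exists (Rmin dl r). split; [apply Rmin_pos; auto|]. intros t ht htl.
  assert (O (shift n t x)).
  { apply hr'; [apply inRd_shift; auto|]. rewrite dist_shift by auto.
    eapply Rlt_le_trans; [exact htl| apply Rmin_r]. }
  rewrite <- !hgh; auto. apply H1; auto. eapply Rlt_le_trans; [exact htl| apply Rmin_l].
Qed.

Lemma pd_local d O n g h x : openRd d O -> O x -> (n < d)%nat ->
  (forall y, O y -> g y = h y) -> pd E n g x = pd E n h x.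
Proof.
  intros. unfold pd. f_equal. apply functional_extensionality; intro v.
  apply propositional_extensionality.
  split; apply is_pderiv_local with d O; auto. intros; symmetry; auto.
Qed.

Lemma is_pderiv_sub n g h x v w : is_pderiv E n g x v -> is_pderiv E n h x w ->
  is_pderiv E n (fun y => bsub (g y) (h y)) x (bsub v w).
Proof.
  intros hg hh e he. destruct (hg (e/2)) as [d1 [hd1 h1]]; [lra|].
  destruct (hh (e/2)) as [d2 [hd2 h2]]; [lra|]. exists (Rmin d1 d2). split; [apply Rmin_pos; auto|].
  intros t ht htl. specialize (h1 t ht (Rlt_le_trans _ _ _ htl (Rmin_l _ _))).
  specialize (h2 t ht (Rlt_le_trans _ _ _ htl (Rmin_r _ _))).
  rewrite bsubACA, bscal_subr, bsubACA. eapply Rle_lt_trans; [apply bnorm_sub_le| lra].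
Qed.

Lemma is_pderiv_shift_comp a b t h p v : is_pderiv E a h (shift b t p) v ->
  is_pderiv E a (fun y => h (shift b t y)) p v.
Proof.
  intros H e he. destruct (H e he) as [dl [hdl H1]]. exists dl. split; auto.
  intros s hs hsl. rewrite shiftC. apply H1; auto.
Qed.

End PartialDerivatives.

Section MeanValue.
Context {E : Banach}.
Implicit Types (phi : R -> E) (v c : E).

Definition has_deriv phi s v : Prop :=
  forall eps, eps > 0 -> exists delta, delta > 0 /\ forall h, h <> 0 -> Rabs h < delta ->
    bnorm (bsub (bscal (/ h) (bsub (phi (s + h)) (phi s))) v) < eps.

Lemma is_pderiv_has_deriv n (g : (nat -> R) -> E) x s v : is_pderiv E n g (shift n s x) v ->
  has_deriv (fun u => g (shift n u x)) s v.
Proof.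
  intros H e he. destruct (H e he) as [dl [hdl H1]]. exists dl. split; auto.
  intros h hh hhl. specialize (H1 h hh hhl). rewrite shift_shift in H1. exact H1.
Qed.

Lemma has_deriv_local_lip phi s v ep : has_deriv phi s v -> ep > 0 ->
  exists delta, delta > 0 /\ forall h, Rabs h < delta ->
    bnorm (bsub (phi (s + h)) (phi s)) <= (bnorm v + ep) * Rabs h.
Proof.
  intros hv hep. destruct (hv ep hep) as [dl [hdl H]]. exists dl. split; auto.
  intros h hh. destruct (Req_dec h 0) as [->|nz].
  - rewrite Rplus_0_r, bsubxx, bnorm0, Rabs_R0. lra.
  - specialize (H h nz hh). rewrite bnorm_scal_quot, Rabs_inv in H by auto.
    assert (hpos : 0 < Rabs h) by (apply Rabs_pos_lt; auto).
    assert (bnorm (bsub (bsub (phi (s + h)) (phi s)) (bscal h v)) < ep * Rabs h).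
    { apply Rmult_lt_reg_l with (/ Rabs h); [apply Rinv_0_lt_compat; lra|].
      rewrite <- Rmult_assoc, (Rmult_comm _ ep), Rmult_assoc, Rinv_l by lra. lra. }
    pose proof (bnorm_le_sub (bsub (phi (s + h)) (phi s)) (bscal h v)).
    rewrite bnorm_scal in H1. lra.
Qed.

(* A supremum argument: the set of [s] up to which the bound holds is closed and open in [0, T]. *)
Lemma local_lip_global phi T K : 0 <= T ->
  (forall s, 0 <= s <= T -> exists delta, delta > 0 /\ forall h, Rabs h < delta ->
     bnorm (bsub (phi (s + h)) (phi s)) <= K * Rabs h) ->
  bnorm (bsub (phi T) (phi 0)) <= K * T.
Proof.
  intros hT H.
  set (P := fun u => bnorm (bsub (phi u) (phi 0)) <= K * u).
  set (S := fun s => 0 <= s <= T /\ forall u, 0 <= u <= s -> P u).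
  assert (hP0 : P 0) by (unfold P; rewrite bsubxx, bnorm0; lra).
  assert (hS0 : S 0) by (split; [lra|]; intros u hu; replace u with 0 by lra; auto).
  destruct (completeness S) as [sg [hub hlub]]; [exists T; intros s [hs _]; lra| exists 0; auto|].
  assert (hsg0 : 0 <= sg) by (apply hub; auto).
  assert (hsgT : sg <= T) by (apply hlub; intros s [hs _]; lra).
  assert (below : forall u, 0 <= u < sg -> P u).
  { intros u hu. destruct (classic (exists s, S s /\ u < s)) as [[s [[_ hs] hus]]|hn].
    - apply hs. lra.
    - exfalso. assert (sg <= u); [|lra]. apply hlub. intros s hs.
      destruct (Rle_dec s u); auto. exfalso; apply hn; exists s; split; auto; lra. }
  destruct (H sg (conj hsg0 hsgT)) as [dl [hdl Hsg]].
  assert (Psg : P sg).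
  { destruct (Req_dec sg 0) as [->|nz]; auto.
    set (h := Rmin dl sg / 2). assert (0 < Rmin dl sg) by (apply Rmin_pos; lra).
    pose proof (Rmin_l dl sg). pose proof (Rmin_r dl sg).
    specialize (Hsg (- h) ltac:(rewrite Rabs_left; unfold h; lra)).
    pose proof (below (sg + - h) ltac:(unfold h; lra)). unfold P in *.
    rewrite Rabs_left in Hsg by (unfold h; lra).
    pose proof (bnorm_sub_tri (phi sg) (phi (sg + - h)) (phi 0)).
    rewrite bnorm_subC in Hsg. lra. }
  destruct (Req_dec sg T) as [<-|neq]; auto.
  exfalso. set (h := Rmin dl (T - sg) / 2).
  assert (0 < Rmin dl (T - sg)) by (apply Rmin_pos; lra).
  pose proof (Rmin_l dl (T - sg)). pose proof (Rmin_r dl (T - sg)).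
  assert (HS : S (sg + h)).
  { split; [unfold h; lra|]. intros u hu. destruct (Rle_dec u sg).
    - destruct (Req_dec u sg) as [->|]; auto. apply below; lra.
    - specialize (Hsg (u - sg) ltac:(rewrite Rabs_right; unfold h in *; lra)).
      rewrite Rabs_right in Hsg by lra. replace (sg + (u - sg)) with u in Hsg by ring.
      unfold P in *. pose proof (bnorm_sub_tri (phi u) (phi sg) (phi 0)). nra. }
  apply hub in HS. unfold h in HS. lra.
Qed.

Lemma mean_value_ineq0 phi T M : 0 <= T ->
  (forall s, 0 <= s <= T -> exists v, has_deriv phi s v /\ bnorm v <= M) ->
  bnorm (bsub (phi T) (phi 0)) <= M * T.
Proof.
  intros hT H. apply Rle_forall_eps. intros e he.
  set (ep := e / (T + 1)). assert (hep : ep > 0) by (unfold ep; apply Rdiv_lt_0_compat; lra).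
  assert (ep * T <= e) by (assert (e = ep * (T + 1)) by (unfold ep; field; lra); nra).
  enough (bnorm (bsub (phi T) (phi 0)) <= (M + ep) * T) by nra.
  apply local_lip_global; auto. intros s hs. destruct (H s hs) as [v [hv hvM]].
  destruct (has_deriv_local_lip phi s v ep hv hep) as [dl [hdl Hdl]].
  exists dl. split; auto. intros h hh. specialize (Hdl h hh).
  pose proof (Rabs_pos h). nra.
Qed.

Lemma mean_value_ineq phi (w : R -> E) c T M : 0 <= T ->
  (forall s, 0 <= s <= T -> has_deriv phi s (w s) /\ bnorm (bsub (w s) c) <= M) ->
  bnorm (bsub (bsub (phi T) (phi 0)) (bscal T c)) <= M * T.
Proof.
  intros hT H. set (psi := fun u => bsub (phi u) (bscal u c)).
  replace (bsub (bsub (phi T) (phi 0)) (bscal T c)) with (bsub (psi T) (psi 0)).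
  2:{ unfold psi. rewrite bscal0l, bsubr0. unfold bsub. rewrite <- !baddA. f_equal. apply baddC. }
  apply mean_value_ineq0; auto. intros s hs. exists (bsub (w s) c). split; [|apply H; auto].
  destruct (H s hs) as [hd _]. intros e he. destruct (hd e he) as [dl [hdl H1]].
  exists dl; split; auto. intros h hh hhl. specialize (H1 h hh hhl).
  unfold psi. rewrite bsubACA, <- bscal_subl. replace (s + h - s) with h by ring.
  rewrite bscal_subr, bscalA, Rinv_l, bscal1 by auto. rewrite bsubACA, bsubxx, bsubr0. auto.
Qed.

End MeanValue.

Definition between0 (t s : R) : Prop := (0 <= s <= t) \/ (t <= s <= 0).

Lemma between0_abs t s : between0 t s -> Rabs s <= Rabs t.
Proof. intros [h|h]; [rewrite !Rabs_right | rewrite !Rabs_left1]; lra. Qed.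

Lemma between0_0 t : between0 t 0.
Proof. destruct (Rle_dec 0 t); [left|right]; lra. Qed.

Lemma between0_grid t N m s : (m <= N)%nat -> between0 (t / (INR N + 1)) s ->
  between0 t (INR m * (t / (INR N + 1)) + s).
Proof.
  intros hm hs. pose proof (pos_INR m). pose proof (pos_INR N). apply le_INR in hm.
  set (h := t / (INR N + 1)) in *. assert (t = h * (INR N + 1)) by (unfold h; field; lra).
  destruct hs; [left|right]; split; nra.
Qed.

Lemma Rabs_grid_step t N : Rabs (t / (INR N + 1)) = Rabs t / (INR N + 1).
Proof.
  pose proof (pos_INR N). unfold Rdiv. rewrite Rabs_mult, Rabs_inv, (Rabs_right (INR N + 1)) by lra.
  reflexivity.
Qed.

Lemma mean_value_segment (E : Banach) g x n t (c : E) M (w : R -> E) :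
  (forall s, between0 t s -> is_pderiv E n g (shift n s x) (w s) /\ bnorm (bsub (w s) c) <= M) ->
  bnorm (bsub (bsub (g (shift n t x)) (g x)) (bscal t c)) <= M * Rabs t.
Proof.
  intros H. destruct (Rle_dec 0 t).
  - rewrite Rabs_right by lra.
    pose proof (mean_value_ineq (fun u => g (shift n u x)) w c t M r) as HM. simpl in HM.
    rewrite shift0 in HM. apply HM. intros s hs. destruct (H s (or_introl hs)).
    split; auto. apply is_pderiv_has_deriv; auto.
  - rewrite Rabs_left by lra.
    pose proof (mean_value_ineq (fun u => g (shift n u (shift n t x))) (fun u => w (t + u)) c
                  (- t) M) as HM.
    simpl in HM. rewrite shift0, shift_shift in HM.
    replace (t + - t) with 0 in HM by ring. rewrite shift0 in HM.
    rewrite <- bnormN.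
    replace (bopp (bsub (bsub (g (shift n t x)) (g x)) (bscal t c)))
      with (bsub (bsub (g x) (g (shift n t x))) (bscal (- t) c)).
    2:{ unfold bsub. rewrite bscalNl, !boppD, !boppK. f_equal. apply baddC. }
    apply HM; [lra|]. intros s hs. destruct (H (t + s)) as [h1 h2]; [right; lra|].
    split; auto. apply is_pderiv_has_deriv. rewrite shift_shift. auto.
Qed.

Definition second_diff {E : Banach} (h : (nat -> R) -> E) a b s t x : E :=
  bsub (bsub (h (shift b t (shift a s x))) (h (shift a s x))) (bsub (h (shift b t x)) (h x)).

Lemma second_diffC {E : Banach} (h : (nat -> R) -> E) a b s t x :
  second_diff h a b s t x = second_diff h b a t s x.
Proof. unfold second_diff. rewrite shiftC, bsubACA. reflexivity. Qed.

(* Two applications of the mean value inequality, first along [e_b], then along [e_a]. *)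
Lemma second_diff_est (E : Banach) d (h : (nat -> R) -> E) a b x rho c0 eta :
  (a < d)%nat -> (b < d)%nat -> a <> b -> inRd d x ->
  (forall y, cube d x rho y -> exists v, is_pderiv E a h y v) ->
  (forall y, cube d x rho y -> exists v, is_pderiv E b (pd E a h) y v) ->
  (forall y, cube d x rho y -> bnorm (bsub (pd E b (pd E a h) y) c0) < eta) ->
  forall s t, Rabs s < rho -> Rabs t < rho ->
    bnorm (bsub (second_diff h a b s t x) (bscal (s * t) c0)) <= Rabs s * Rabs t * eta.
Proof.
  intros ha hb hab hx Hda Hdba Hc s t hs ht.
  assert (Hpt : forall sg tau, Rabs sg <= Rabs s -> Rabs tau <= Rabs t ->
     cube d x rho (shift b tau (shift a sg x))).
  { intros sg tau h1 h2. apply cube_shift; auto.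
    - apply cube_shift_center; auto. lra.
    - rewrite shift_other by auto. replace (x b + tau - x b) with tau by ring. lra. }
  assert (Hpt0 : forall sg, Rabs sg <= Rabs s -> cube d x rho (shift a sg x)).
  { intros sg hsg. rewrite <- (shift0 b (shift a sg x)). apply Hpt; auto.
    rewrite Rabs_R0; apply Rabs_pos. }
  set (g2 := fun y => bsub (h (shift b t y)) (h y)).
  assert (Hw : forall sg, between0 s sg ->
    is_pderiv E a g2 (shift a sg x)
      (bsub (pd E a h (shift b t (shift a sg x))) (pd E a h (shift a sg x))) /\
    bnorm (bsub (bsub (pd E a h (shift b t (shift a sg x))) (pd E a h (shift a sg x)))
      (bscal t c0)) <= Rabs t * eta).
  { intros sg hsg. apply between0_abs in hsg. split.
    - apply is_pderiv_sub; [apply is_pderiv_shift_comp|]; apply pdP, Hda.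
      + apply Hpt; auto; lra.
      + apply Hpt0; auto.
    - rewrite Rmult_comm.
      apply (mean_value_segment E (pd E a h) (shift a sg x) b t c0 eta
               (fun tau => pd E b (pd E a h) (shift b tau (shift a sg x)))).
      intros tau htau. apply between0_abs in htau. split.
      + apply pdP, Hdba, Hpt; auto.
      + left. apply Hc, Hpt; auto. }
  pose proof (mean_value_segment E g2 x a s (bscal t c0) (Rabs t * eta) _ Hw) as HM.
  unfold second_diff. rewrite <- bscalA.
  replace (Rabs s * Rabs t * eta) with (Rabs t * eta * Rabs s) by ring. exact HM.
Qed.

Lemma contOn_cube (E : Banach) d O (g : (nat -> R) -> E) x eta :
  openRd d O -> O x -> contOn E d O g -> eta > 0 ->
  exists rho, rho > 0 /\ forall y, cube d x rho y -> O y /\ bnorm (bsub (g y) (g x)) < eta.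
Proof.
  intros hO hx hg heta. assert (hxd : inRd d x) by apply (hO x hx).
  destruct (open_cube d O x hO hx) as [r [hr Hr]]. destruct (hg x hx eta heta) as [dl [hdl Hdl]].
  pose proof (pos_INR d). exists (Rmin r (dl / (INR d + 1))).
  split; [apply Rmin_pos; auto; apply Rdiv_lt_0_compat; lra|]. intros y hy.
  assert (hyO : O y) by (apply Hr; eapply cube_le; [apply Rmin_l| exact hy]).
  split; auto. apply Hdl; auto. apply cube_in_ball; auto. eapply cube_le; [apply Rmin_r| exact hy].
Qed.

Lemma schwarz (E : Banach) d O (h : (nat -> R) -> E) a b x :
  openRd d O -> O x -> (a < d)%nat -> (b < d)%nat ->
  (forall y, O y -> exists v, is_pderiv E a h y v) ->
  (forall y, O y -> exists v, is_pderiv E b h y v) ->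
  (forall y, O y -> exists v, is_pderiv E b (pd E a h) y v) ->
  (forall y, O y -> exists v, is_pderiv E a (pd E b h) y v) ->
  contOn E d O (pd E b (pd E a h)) -> contOn E d O (pd E a (pd E b h)) ->
  pd E b (pd E a h) x = pd E a (pd E b h) x.
Proof.
  intros hO hx ha hb H1 H2 H3 H4 C1 C2.
  destruct (Nat.eq_dec a b) as [->|ne]; [reflexivity|].
  apply bsub_small_eq. intros eps heps. assert (hxd : inRd d x) by apply (hO x hx).
  destruct (contOn_cube E d O _ x (eps/2) hO hx C1) as [r1 [hr1 R1]]; [lra|].
  destruct (contOn_cube E d O _ x (eps/2) hO hx C2) as [r2 [hr2 R2]]; [lra|].
  set (rho := Rmin r1 r2). assert (hrho : rho > 0) by (apply Rmin_pos; auto).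
  assert (R1' : forall y, cube d x rho y -> O y /\ bnorm (bsub (pd E b (pd E a h) y)
    (pd E b (pd E a h) x)) < eps/2) by (intros; apply R1; eapply cube_le; [apply Rmin_l|]; eauto).
  assert (R2' : forall y, cube d x rho y -> O y /\ bnorm (bsub (pd E a (pd E b h) y)
    (pd E a (pd E b h) x)) < eps/2) by (intros; apply R2; eapply cube_le; [apply Rmin_r|]; eauto).
  set (s := rho / 2). assert (hs : Rabs s < rho) by (unfold s; rewrite Rabs_right; lra).
  assert (E1 := second_diff_est E d h a b x rho _ (eps/2) ha hb ne hxd
    ltac:(intros; apply H1, R1'; auto) ltac:(intros; apply H3, R1'; auto)
    ltac:(intros; apply R1'; auto) s s hs hs).
  assert (E2 := second_diff_est E d h b a x rho _ (eps/2) hb ha (not_eq_sym ne) hxd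
    ltac:(intros; apply H2, R2'; auto) ltac:(intros; apply H4, R2'; auto)
    ltac:(intros; apply R2'; auto) s s hs hs).
  rewrite second_diffC in E2.
  set (c0 := pd E b (pd E a h) x) in *. set (c1 := pd E a (pd E b h) x) in *.
  set (D := second_diff h a b s s x) in *.
  pose proof (bnorm_sub_tri (bscal (s * s) c0) D (bscal (s * s) c1)) as T.
  rewrite (bnorm_subC _ D), <- bscal_subr, bnorm_scal in T.
  assert (hs0 : 0 < s) by (unfold s; lra).
  rewrite Rabs_right in * by nra.
  assert (s * s * bnorm (bsub c0 c1) <= s * s * eps) by nra.
  apply Rmult_le_reg_l in H; nra.
Qed.

Definition admissible d k (l : list nat) : Prop :=
  Forall (fun n => (n < d)%nat) l /\ (length l <= k)%nat.

Lemma admissible_tail d k n l : admissible d k (n :: l) -> admissible d k l.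
Proof. intros [h1 h2]. inversion h1; subst. split; auto. simpl in h2; lia. Qed.

Lemma admissible_head d k n l : admissible d k (n :: l) -> (n < d)%nat.
Proof. intros [h _]. inversion h; auto. Qed.

Lemma admissible_cons d k n l : (n < d)%nat -> admissible d k l -> (length l < k)%nat ->
  admissible d k (n :: l).
Proof. intros hn [h1 h2] hk. split; [constructor; auto| simpl; lia]. Qed.

Definition multiplicity (l : list nat) : nat -> nat := fun j => count_occ Nat.eq_dec l j.

Lemma count_mlist beta d x :
  count_occ Nat.eq_dec (mlist beta d) x = if x <? d then beta x else 0%nat.
Proof.
  induction d; simpl; [reflexivity|]. rewrite count_occ_app, IHd.
  destruct (Nat.eq_dec x d) as [->|ne].
  - rewrite count_occ_repeat_eq, Nat.ltb_irrefl by auto.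
    replace (d <? S d) with true by (symmetry; apply Nat.ltb_lt; lia). lia.
  - rewrite count_occ_repeat_neq by auto.
    destruct (x <? d) eqn:E1; destruct (x <? S d) eqn:E2; try lia.
    + apply Nat.ltb_lt in E1; apply Nat.ltb_ge in E2; lia.
    + apply Nat.ltb_ge in E1; apply Nat.ltb_lt in E2; lia.
Qed.

Lemma mlist_length beta d : length (mlist beta d) = morder beta d.
Proof. induction d; simpl; auto. rewrite length_app, repeat_length. lia. Qed.

Lemma mlist_admissible d k beta : (morder beta d <= k)%nat -> admissible d k (mlist beta d).
Proof.
  intro h. split; [|rewrite mlist_length; auto].
  induction d; simpl; auto. apply Forall_app. split.
  - eapply Forall_impl; [|apply IHd]; [simpl; intros; lia|]. simpl in h; lia.
  - apply Forall_forall. intros x hx. apply repeat_spec in hx. lia.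
Qed.

Lemma perm_mlist d l : Forall (fun n => (n < d)%nat) l -> Permutation l (mlist (multiplicity l) d).
Proof.
  intro hl. apply (Permutation_count_occ Nat.eq_dec). intro x. rewrite count_mlist.
  destruct (x <? d) eqn:E; [reflexivity|]. apply Nat.ltb_ge in E.
  apply count_occ_not_In. intro hin. rewrite Forall_forall in hl. specialize (hl x hin). lia.
Qed.

Lemma morder_multiplicity d l : Forall (fun n => (n < d)%nat) l ->
  morder (multiplicity l) d = length l.
Proof. intro hl. rewrite <- mlist_length. symmetry. apply Permutation_length, perm_mlist; auto. Qed.

Fixpoint admissible_lists (d k : nat) : list (list nat) :=
  match k with
  | O => nil :: nil
  | S k' => nil :: flat_map (fun l => map (fun n => n :: l) (seq 0 d)) (admissible_lists d k')
  end.

Lemma admissible_listsP d k l : admissible d k l -> In l (admissible_lists d k).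
Proof.
  revert l. induction k; intros l [h1 h2].
  - destruct l; simpl in *; [auto|lia].
  - destruct l as [|n l]; simpl; [auto|]. right. apply in_flat_map. exists l.
    inversion h1; subst. split; [apply IHk; split; auto; simpl in h2; lia|].
    apply in_map_iff. exists n. split; auto. apply in_seq. lia.
Qed.

Section CkFunctions.
Context {E : Banach}.
Variables (d : nat) (O : (nat -> R) -> Prop) (k : nat).
Hypothesis hO : openRd d O.

Lemma iterd_perm g : Ck E d O k g -> forall l l', Permutation l l' -> admissible d k l ->
  forall y, O y -> iterd E l g y = iterd E l' g y.
Proof.
  intros [C1 C2] l l' hp. induction hp; intros [hf hk] z hz; simpl in hk.
  - reflexivity.
  - simpl. inversion hf; subst. apply pd_local with d O; auto.
    intros; apply IHhp; auto. split; auto; lia.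
  - simpl. inversion hf; subst. inversion H2; subst. apply schwarz with d O; auto.
    + intros; apply C1; auto; lia.
    + intros; apply C1; auto; lia.
    + intros. apply (C1 (x :: l)); auto; simpl; lia.
    + intros. apply (C1 (y :: l)); auto; simpl; lia.
    + apply (C2 (y :: x :: l)); auto.
    + apply (C2 (x :: y :: l)); auto.
  - rewrite IHhp1 by (try split; auto). apply IHhp2; auto.
    split; [eapply Permutation_Forall; eauto| rewrite <- (Permutation_length hp1); auto].
Qed.

Lemma iterd_dpart g l y : Ck E d O k g -> admissible d k l -> O y ->
  iterd E l g y = dpart E d (multiplicity l) g y.
Proof. intros hg hl hy. apply iterd_perm; auto. apply perm_mlist, hl. Qed.

Lemma iterd_sub g h : Ck E d O k g -> Ck E d O k h -> forall l, admissible d k l ->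
  forall y, O y -> iterd E l (fun z => bsub (g z) (h z)) y = bsub (iterd E l g y) (iterd E l h y).
Proof.
  intros [G1 G2] [H1 H2] l. induction l as [|n l IH]; intros hl y hy; [reflexivity|].
  pose proof (admissible_tail _ _ _ _ hl) as hl'. destruct hl as [hf hk]. inversion hf; subst.
  simpl in *. transitivity (pd E n (fun z => bsub (iterd E l g z) (iterd E l h z)) y).
  - apply pd_local with d O; auto.
  - apply pd_eq. apply is_pderiv_sub; apply pdP; [apply G1|apply H1]; auto; lia.
Qed.

End CkFunctions.

Definition net_cauchy {E : Banach} (I : Type) (le : I -> I -> Prop) (u : I -> E) : Prop :=
  forall eps, eps > 0 -> exists i0, forall i j, le i0 i -> le i0 j -> bnorm (bsub (u i) (u j)) < eps.

Section Nets.
Context {I : Type} {le : I -> I -> Prop}.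
Hypothesis hd : directed I le.

Lemma directed_inhabited : exists i : I, True.
Proof. destruct hd as [[i] _]. exists i; auto. Qed.

Lemma directed_refl i : le i i.
Proof. apply hd. Qed.

Lemma directed_trans i j l : le i j -> le j l -> le i l.
Proof. apply hd. Qed.

Lemma directed_ub i j : exists l, le i l /\ le j l.
Proof. apply hd. Qed.

Lemma directed_tail2 i1 i2 : exists i0, forall i, le i0 i -> le i1 i /\ le i2 i.
Proof.
  destruct (directed_ub i1 i2) as [i0 [h1 h2]]. exists i0.
  intros i hi. split; eapply directed_trans; eauto.
Qed.

Lemma directed_tail_list {A : Type} (L : list A) (P : A -> I -> Prop) :
  (forall a i j, P a i -> le i j -> P a j) ->
  (forall a, In a L -> exists i, P a i) -> exists i, forall a, In a L -> P a i.
Proof.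
  intros hP. induction L as [|a L IH]; intros H.
  - destruct directed_inhabited as [i _]. exists i. intros a [].
  - destruct IH as [i1 h1]; [intros; apply H; simpl; auto|].
    destruct (H a (or_introl eq_refl)) as [i2 h2].
    destruct (directed_ub i1 i2) as [l [l1 l2]]. exists l. intros b [<-|hb]; eauto.
Qed.

Context {E : Banach}.
Implicit Types (u w : I -> E).

Lemma net_complete u : net_cauchy I le u -> exists L, net_lim E I le u L.
Proof.
  intros hc. destruct hd as [[i00] _].
  set (c := fun m : nat => epsilon (inhabits i00) (fun i0 => forall i j, le i0 i -> le i0 j ->
     bnorm (bsub (u i) (u j)) < / (INR m + 1))).
  assert (hcm : forall m i j, le (c m) i -> le (c m) j -> bnorm (bsub (u i) (u j)) < / (INR m + 1)).
  { intro m. apply epsilon_spec, hc, Rinv_0_lt_compat. pose proof (pos_INR m); lra. }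
  set (ub := fun i j => epsilon (inhabits i00) (fun l => le i l /\ le j l)).
  assert (hub : forall i j, le i (ub i j) /\ le j (ub i j))
    by (intros; apply epsilon_spec, directed_ub).
  (* an increasing sequence [js] cofinal with the moduli [c m] *)
  set (js := fix js (m : nat) : I := match m with O => c O | S m' => ub (js m') (c (S m')) end).
  assert (hjc : forall m, le (c m) (js m)) by (intros [|m]; [apply directed_refl| apply hub]).
  assert (hjm : forall m p, (m <= p)%nat -> le (js m) (js p)).
  { intros m p hmp. induction hmp; [apply directed_refl|].
    eapply directed_trans; [exact IHhmp| apply hub]. }
  assert (hjs : forall m p, (m <= p)%nat -> le (c m) (js p))
    by (intros; eapply directed_trans; [apply hjc| apply hjm; auto]).
  destruct (bcomplete E (fun m => u (js m))) as [L hL].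
  { intros e he. destruct (inv_INR_small e he) as [N hN]. exists N. intros m p hm hp.
    eapply Rlt_trans; [|exact hN]. apply hcm; auto. }
  exists L. intros e he. destruct (inv_INR_small (e/2)) as [N1 hN1]; [lra|].
  destruct (hL (e/2)) as [N2 hN2]; [lra|]. set (m := Nat.max N1 N2).
  exists (js m). intros i hi. specialize (hN2 m ltac:(lia)).
  assert (bnorm (bsub (u i) (u (js m))) < / (INR N1 + 1)).
  { apply hcm; [eapply directed_trans; [|exact hi]|]; apply hjs; lia. }
  pose proof (bnorm_sub_tri (u i) (u (js m)) L). change (bnorm (bsub (u (js m)) L) < e / 2) in hN2. lra.
Qed.

Lemma net_lim_cauchy u L : net_lim E I le u L -> net_cauchy I le u.
Proof.
  intros h e he. destruct (h (e/2)) as [i0 hi]; [lra|]. exists i0. intros i j hi' hj.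
  pose proof (bnorm_sub_tri (u i) L (u j)). pose proof (hi i hi'). pose proof (hi j hj).
  rewrite (bnorm_subC L) in H. lra.
Qed.

Lemma net_lim_sub u w L M : net_lim E I le u L -> net_lim E I le w M ->
  net_lim E I le (fun i => bsub (u i) (w i)) (bsub L M).
Proof.
  intros hu hw e he. destruct (hu (e/2)) as [i1 h1]; [lra|].
  destruct (hw (e/2)) as [i2 h2]; [lra|]. destruct (directed_tail2 i1 i2) as [i0 H].
  exists i0. intros i hi. destruct (H i hi). rewrite bsubACA.
  eapply Rle_lt_trans; [apply bnorm_sub_le|]. specialize (h1 i H0). specialize (h2 i H1). lra.
Qed.

Lemma net_lim_scal u L a : net_lim E I le u L -> net_lim E I le (fun i => bscal a (u i)) (bscal a L).
Proof.
  intros hu e he. pose proof (Rabs_pos a).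
  destruct (hu (e / (Rabs a + 1))) as [i0 h0]; [apply Rdiv_lt_0_compat; lra|].
  exists i0. intros i hi. rewrite <- bscal_subr, bnorm_scal. specialize (h0 i hi).
  pose proof (bnorm_ge0 (bsub (u i) L)).
  assert (e = (e / (Rabs a + 1)) * (Rabs a + 1)) by (field; lra).
  set (q := e / (Rabs a + 1)) in *. nra.
Qed.

Lemma net_lim_le u L a : net_lim E I le u L -> (forall i, bnorm (u i) <= a) -> bnorm L <= a.
Proof.
  intros hu h1. apply Rle_forall_eps. intros e he. destruct (hu e he) as [i2 h2].
  specialize (h2 i2 (directed_refl i2)). specialize (h1 i2).
  pose proof (bnorm_le_sub L (u i2)). rewrite bnorm_subC in h2. lra.
Qed.

Lemma net_cauchy_transfer u w :
  (forall eps, eps > 0 -> exists i0, forall i j, le i0 i -> le i0 j ->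
     bnorm (bsub (bsub (u i) (u j)) (bsub (w i) (w j))) <= eps) ->
  net_cauchy I le u -> net_cauchy I le w.
Proof.
  intros H hc e he. destruct (H (e/2)) as [i1 h1]; [lra|]. destruct (hc (e/2)) as [i2 h2]; [lra|].
  destruct (directed_tail2 i1 i2) as [i0 H0]. exists i0. intros i j hi hj.
  destruct (H0 i hi), (H0 j hj). specialize (h1 i j H1 H3). specialize (h2 i j H2 H4).
  pose proof (bnorm_le_sub (bsub (w i) (w j)) (bsub (u i) (u j))).
  rewrite bnorm_subC in h1. lra.
Qed.

End Nets.

Lemma shrink_le r0 m : r0 > 0 -> r0 / (INR m + 1) <= r0.
Proof.
  intro hr0. pose proof (pos_INR m). unfold Rdiv. rewrite <- (Rmult_1_r r0) at 2.
  apply Rmult_le_compat_l; [lra|]. rewrite <- Rinv_1. apply Rinv_le_contravar; lra.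
Qed.

Lemma shrinking_cubes_in_ball d x0 r0 rho : inRd d x0 -> r0 > 0 -> rho > 0 ->
  exists N, forall m p, (N <= m)%nat -> cube d x0 (r0 / (INR m + 1)) p -> dist d x0 p < rho.
Proof.
  intros hx0 hr0 hrho. pose proof (pos_INR d).
  destruct (inv_INR_small (rho / (INR d + 1) / r0)) as [N hN].
  { repeat apply Rdiv_lt_0_compat; lra. }
  exists N. intros m p hm hp. apply cube_in_ball; auto. eapply cube_le; [|exact hp].
  apply le_INR in hm. pose proof (pos_INR N).
  apply Rle_trans with (r0 * / (INR N + 1)).
  - unfold Rdiv. apply Rmult_le_compat_l; [lra|]. apply Rinv_le_contravar; lra.
  - apply Rlt_le. apply Rmult_lt_reg_l with (/ r0); [apply Rinv_0_lt_compat; lra|].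
    rewrite <- Rmult_assoc, Rinv_l, Rmult_1_l by lra. unfold Rdiv in hN |- *.
    rewrite Rmult_comm. exact hN.
Qed.

(* Two sequences converging to [x0], together with [x0], form a compact set: one member of an
   open cover contains [x0] and hence all but finitely many terms. *)
Lemma shrinking_cubes_compact d O (x0 : nat -> R) (ys zs : nat -> nat -> R) r0 :
  inRd d x0 -> r0 > 0 -> (forall y, cube d x0 r0 y -> O y) ->
  (forall m, cube d x0 (r0 / (INR m + 1)) (ys m)) ->
  (forall m, cube d x0 (r0 / (INR m + 1)) (zs m)) ->
  compact_in d O (fun p => p = x0 \/ exists m, p = ys m \/ p = zs m).
Proof.
  intros hx0 hr0 hO hy hz.
  assert (hK : forall p, (p = x0 \/ exists m, p = ys m \/ p = zs m) -> cube d x0 r0 p).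
  { intros p [->|[m [->| ->]]]; [apply cube_center; auto| |];
      (eapply cube_le; [apply shrink_le; auto| auto]). }
  split; [split|]; [intros p hp; apply hK; auto| |intros; apply hO, hK; auto].
  intros J Oj hOj hcov.
  destruct (hcov x0 (or_introl eq_refl)) as [j0 hj0].
  destruct (hOj j0 x0 hj0) as [_ [rho [hrho Hrho]]].
  destruct (shrinking_cubes_in_ball d x0 r0 rho hx0 hr0 hrho) as [N hN].
  assert (hfar : forall m p, (N <= m)%nat -> cube d x0 (r0 / (INR m + 1)) p -> Oj j0 p)
    by (intros m p hm hp; apply Hrho; [apply hp| eapply hN; eauto]).
  set (jf := fun p => epsilon (inhabits j0) (fun j => Oj j p)).
  assert (hjf : forall p, (p = x0 \/ exists m, p = ys m \/ p = zs m) -> Oj (jf p) p)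
    by (intros p hp; apply epsilon_spec, hcov; auto).
  exists (j0 :: map (fun m => jf (ys m)) (seq 0 N) ++ map (fun m => jf (zs m)) (seq 0 N)).
  intros p [->|[m [->| ->]]]; [exists j0; split; simpl; auto| |];
    (destruct (Nat.lt_ge_cases m N); [|exists j0; split; [left; auto| eapply hfar; eauto]]).
  - exists (jf (ys m)). split; [|apply hjf; right; exists m; auto].
    right. apply in_or_app. left. apply in_map_iff. exists m. split; auto. apply in_seq. lia.
  - exists (jf (zs m)). split; [|apply hjf; right; exists m; auto].
    right. apply in_or_app. right. apply in_map_iff. exists m. split; auto. apply in_seq. lia.
Qed.

Definition cube_bound (E : Banach) d k gamma I (F : I -> (nat -> R) -> E) x0 r M : Prop :=
  (forall i beta y, (morder beta d <= k)%nat -> cube d x0 r y ->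
     bnorm (dpart E d beta (F i) y) <= M) /\
  (forall i beta y z, morder beta d = k -> cube d x0 r y -> cube d x0 r z -> y <> z ->
     bnorm (bsub (dpart E d beta (F i) y) (dpart E d beta (F i) z))
       / Rpower (dist d y z) gamma <= M).

(* If no cube of radius [r0/(m+1)] carried the bound [m+1], the witnesses of failure would
   form, with [x0], a compact set on which the net is unbounded. *)
Lemma local_cube_bound (E : Banach) d O k gamma I (F : I -> (nat -> R) -> E) :
  openRd d O -> bounded_net E d O k gamma I F ->
  forall x0, O x0 -> exists r M, r > 0 /\ M > 0 /\ (forall y, cube d x0 r y -> O y) /\
    cube_bound E d k gamma I F x0 r M.
Proof.
  intros hO [_ hB] x0 hx0. destruct (open_cube d O x0 hO hx0) as [r0 [hr0 Hr0]].
  assert (hx0d : inRd d x0) by apply (hO x0 hx0).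
  apply NNPP. intro Hneg.
  set (Pv := fun (m : nat) (yz : (nat -> R) * (nat -> R)) =>
    cube d x0 (r0 / (INR m + 1)) (fst yz) /\ cube d x0 (r0 / (INR m + 1)) (snd yz) /\
    exists i beta, ((morder beta d <= k)%nat /\ bnorm (dpart E d beta (F i) (fst yz)) > INR m) \/
      (morder beta d = k /\ fst yz <> snd yz /\
        bnorm (bsub (dpart E d beta (F i) (fst yz)) (dpart E d beta (F i) (snd yz)))
          / Rpower (dist d (fst yz) (snd yz)) gamma > INR m)).
  assert (Hv : forall m, exists yz, Pv m yz).
  { intro m. apply NNPP. intro hm. apply Hneg. exists (r0 / (INR m + 1)), (INR m + 1).
    pose proof (pos_INR m). pose proof (shrink_le r0 m hr0).
    split; [apply Rdiv_lt_0_compat; lra|]. split; [lra|].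
    split; [intros; apply Hr0; eapply cube_le; eauto|]. split.
    - intros i beta y hb hy. apply Rnot_gt_le. intro hc. apply hm. exists (y, y).
      unfold Pv; simpl. split; [auto| split; [auto|]]. exists i, beta. left. split; auto; lra.
    - intros i beta y z hb hy hz hne. apply Rnot_gt_le. intro hc. apply hm. exists (y, z).
      unfold Pv; simpl. split; [auto| split; [auto|]]. exists i, beta. right.
      split; [auto| split; [auto| lra]]. }
  set (yz := fun m => epsilon (inhabits (x0, x0)) (Pv m)).
  assert (Hyz : forall m, Pv m (yz m)) by (intro m; apply epsilon_spec, Hv).
  destruct (hB _ (shrinking_cubes_compact d O x0 (fun m => fst (yz m)) (fun m => snd (yz m)) r0
     hx0d hr0 Hr0 (fun m => proj1 (Hyz m)) (fun m => proj1 (proj2 (Hyz m))))) as [M0 hM0].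
  destruct (INR_unbounded M0) as [m hm].
  destruct (Hyz m) as [_ [_ [i [beta [[hb hv]|[hb [hne hv]]]]]]].
  - assert (bnorm (dpart E d beta (F i) (fst (yz m))) <= M0); [|lra].
    destruct (hM0 i) as [h1 _]. apply h1; auto. right. exists m. left. reflexivity.
  - assert (bnorm (bsub (dpart E d beta (F i) (fst (yz m))) (dpart E d beta (F i) (snd (yz m))))
          / Rpower (dist d (fst (yz m)) (snd (yz m))) gamma <= M0); [|lra].
    destruct (hM0 i) as [_ h2]. apply h2; auto; right; exists m; auto.
Qed.

Definition coord_path (j : nat) (y z : nat -> R) : nat -> R := fun i => if i <? j then z i else y i.

Lemma coord_path0 y z : coord_path 0 y z = y.
Proof. reflexivity. Qed.

Lemma coord_path_end d y z : inRd d y -> inRd d z -> coord_path d y z = z.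
Proof.
  intros hy hz. apply functional_extensionality; intro i. unfold coord_path.
  destruct (i <? d) eqn:E; auto. apply Nat.ltb_ge in E. rewrite hy, hz; auto.
Qed.

Lemma coord_pathS j y z : coord_path (S j) y z = shift j (z j - y j) (coord_path j y z).
Proof.
  apply functional_extensionality; intro i. unfold coord_path, shift.
  destruct (Nat.eqb i j) eqn:E.
  - apply Nat.eqb_eq in E. subst. rewrite Nat.ltb_irrefl.
    replace (j <? S j) with true by (symmetry; apply Nat.ltb_lt; lia). ring.
  - apply Nat.eqb_neq in E. destruct (i <? S j) eqn:E1; destruct (i <? j) eqn:E2; auto.
    + apply Nat.ltb_lt in E1; apply Nat.ltb_ge in E2; lia.
    + apply Nat.ltb_ge in E1; apply Nat.ltb_lt in E2; lia.
Qed.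

Lemma coord_path_cube d x0 r y z j : cube d x0 r y -> cube d x0 r z ->
  cube d x0 r (coord_path j y z).
Proof.
  intros [hy cy] [hz cz]. split; intros i hi; unfold coord_path; destruct (i <? j); auto.
Qed.

Lemma coord_path_step_cube d x0 r y z j s : (j < d)%nat -> cube d x0 r y -> cube d x0 r z ->
  between0 (z j - y j) s -> cube d x0 r (shift j s (coord_path j y z)).
Proof.
  intros hj hy hz hs. apply cube_shift; [lia| apply coord_path_cube; auto|].
  unfold coord_path. rewrite Nat.ltb_irrefl.
  destruct hy as [_ hy], hz as [_ hz]. specialize (hy j hj). specialize (hz j hj).
  apply Rabs_def2 in hy. apply Rabs_def2 in hz. apply Rabs_def1; destruct hs; lra.
Qed.

Lemma cube_lipschitz (E : Banach) d x0 r (g : (nat -> R) -> E) M :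
  (forall j y, (j < d)%nat -> cube d x0 r y -> exists v, is_pderiv E j g y v /\ bnorm v <= M) ->
  forall y z, cube d x0 r y -> cube d x0 r z ->
    bnorm (bsub (g z) (g y)) <= M * sumabs d (fun i => z i - y i).
Proof.
  intros H y z hy hz.
  assert (Hj : forall j, (j <= d)%nat ->
    bnorm (bsub (g (coord_path j y z)) (g y)) <= M * sumabs j (fun i => z i - y i)).
  { induction j as [|j IHj]; intros hj.
    - simpl. rewrite coord_path0, bsubxx, bnorm0. lra.
    - rewrite coord_pathS. simpl sumabs.
      set (w := fun s => epsilon (inhabits bzero)
        (fun v => is_pderiv E j g (shift j s (coord_path j y z)) v /\ bnorm v <= M)).
      assert (hw : forall s, between0 (z j - y j) s ->
        is_pderiv E j g (shift j s (coord_path j y z)) (w s) /\ bnorm (bsub (w s) bzero) <= M).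
      { intros s hs. rewrite bsubr0. apply epsilon_spec, H; [lia|].
        apply coord_path_step_cube; auto. }
      pose proof (mean_value_segment E g (coord_path j y z) j (z j - y j) bzero M w hw) as HM.
      rewrite bscal0r, bsubr0 in HM.
      pose proof (bnorm_sub_tri (g (shift j (z j - y j) (coord_path j y z)))
                    (g (coord_path j y z)) (g y)).
      specialize (IHj ltac:(lia)). lra. }
  specialize (Hj d (Nat.le_refl d)). rewrite coord_path_end in Hj; auto; [apply hy| apply hz].
Qed.

Section CubeEquicontinuity.
Variables (E : Banach) (d : nat) (O : (nat -> R) -> Prop) (k : nat) (gamma : R).
Variables (I : Type) (F : I -> (nat -> R) -> E).
Hypotheses (hO : openRd d O) (hg : 0 < gamma) (hCk : forall i, Ck E d O k (F i)).
Variables (x0 : nat -> R) (r M : R).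
Hypotheses (hM : M > 0) (hcO : forall y, cube d x0 r y -> O y)
  (hbound : cube_bound E d k gamma I F x0 r M).

Lemma cube_holder l i y z : admissible d k l -> length l = k -> cube d x0 r y -> cube d x0 r z ->
  y <> z -> bnorm (bsub (iterd E l (F i) y) (iterd E l (F i) z)) <= M * Rpower (dist d y z) gamma.
Proof.
  intros hl hk hy hz hne.
  rewrite !(iterd_dpart d O k hO (F i) l) by auto.
  assert (hq := proj2 hbound i (multiplicity l) y z).
  rewrite morder_multiplicity in hq by apply hl. specialize (hq hk hy hz hne).
  assert (hP : 0 < Rpower (dist d y z) gamma) by apply exp_pos.
  unfold Rdiv in hq. apply Rmult_le_reg_r with (/ Rpower (dist d y z) gamma);
    [apply Rinv_0_lt_compat; auto|]. rewrite Rmult_assoc, Rinv_r, Rmult_1_r by lra. exact hq.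
Qed.

Lemma cube_lipschitz_low l i y z : admissible d k l -> (length l < k)%nat ->
  cube d x0 r y -> cube d x0 r z ->
  bnorm (bsub (iterd E l (F i) y) (iterd E l (F i) z)) <= M * (INR d * dist d y z).
Proof.
  intros hl hk hy hz. rewrite bnorm_subC.
  apply Rle_trans with (M * sumabs d (fun j => z j - y j)).
  - apply (cube_lipschitz E d x0 r (iterd E l (F i)) M); auto.
    intros j w hj hw. exists (iterd E (j :: l) (F i) w). split.
    + apply pdP. apply (proj1 (hCk i)); [apply hl| exact hk| exact hj| apply hcO; auto].
    + pose proof (admissible_cons d k j l hj hl hk) as hjl.
      rewrite (iterd_dpart d O k hO (F i) (j :: l)) by auto.
      apply (proj1 hbound); auto. rewrite morder_multiplicity by apply hjl. apply hjl.
  - apply Rmult_le_compat_l; [lra| apply sumabs_le_dist].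
Qed.

Lemma cube_equicont eps : eps > 0 -> exists delta, delta > 0 /\ forall l i y z,
    admissible d k l -> cube d x0 r y -> cube d x0 r z -> dist d y z < delta ->
    bnorm (bsub (iterd E l (F i) y) (iterd E l (F i) z)) <= eps.
Proof.
  intros heps. pose proof (pos_INR d).
  set (d1 := Rpower (eps / M) (/ gamma)). set (d2 := eps / (M * (INR d + 1))).
  assert (hd1 : 0 < d1) by apply exp_pos.
  assert (hd2 : 0 < d2) by (apply Rdiv_lt_0_compat; nra).
  exists (Rmin d1 d2). split; [apply Rmin_pos; auto|].
  intros l i y z hl hy hz hdist. pose proof (dist_ge0 d y z).
  pose proof (Rmin_l d1 d2). pose proof (Rmin_r d1 d2).
  destruct (Nat.eq_dec (length l) k) as [eqk|ltk].
  - destruct (classic (y = z)) as [<-|hne]; [rewrite bsubxx, bnorm0; lra|].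
    eapply Rle_trans; [apply cube_holder; auto|].
    assert (hpos : 0 < dist d y z) by (apply dist_gt0; auto; [apply hy| apply hz]).
    assert (Rpower (dist d y z) gamma < eps / M).
    { replace (eps / M) with (Rpower d1 gamma)
        by (unfold d1; rewrite Rpower_mult, Rinv_l, Rpower_1 by (try apply Rdiv_lt_0_compat; lra);
            reflexivity).
      apply Rlt_Rpower_l; lra. }
    assert (eps = (eps / M) * M) by (field; lra). nra.
  - eapply Rle_trans; [apply cube_lipschitz_low; auto; destruct hl; lia|].
    assert (eps = d2 * (M * (INR d + 1))) by (unfold d2; field; nra).
    assert (INR d * dist d y z <= (INR d + 1) * d2) by nra. nra.
Qed.

End CubeEquicontinuity.

Section BoundedNet.
Variables (E : Banach) (d : nat) (O : (nat -> R) -> Prop) (k : nat) (gamma : R).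
Variables (I : Type) (le : I -> I -> Prop) (F : I -> (nat -> R) -> E).
Hypotheses (hO : openRd d O) (hg : 0 < gamma) (hd : directed I le)
  (hB : bounded_net E d O k gamma I F).

Let hCk i : Ck E d O k (F i) := proj1 (proj1 hB i).

Lemma inRd_of x : O x -> inRd d x.
Proof. intro hx. apply (hO x hx). Qed.

Definition equicont_on_cube x0 r : Prop :=
  forall eps, eps > 0 -> exists delta, delta > 0 /\ forall l i y z, admissible d k l ->
    cube d x0 r y -> cube d x0 r z -> dist d y z < delta ->
    bnorm (bsub (iterd E l (F i) y) (iterd E l (F i) z)) <= eps.

Lemma local_equicont x0 : O x0 -> exists r, r > 0 /\ (forall y, cube d x0 r y -> O y) /\
  equicont_on_cube x0 r.
Proof.
  intro hx0. destruct (local_cube_bound E d O k gamma I F hO hB x0 hx0) as [r [M [hr [hM [hc hL]]]]].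
  exists r. split; [auto| split; [auto|]].
  exact (cube_equicont E d O k gamma I F hO hg hCk x0 r M hM hc hL).
Qed.

Lemma equicont_at x : O x -> forall eps, eps > 0 -> exists rho, rho > 0 /\
  (forall y, cube d x rho y -> O y) /\ forall l i y, admissible d k l -> cube d x rho y ->
    bnorm (bsub (iterd E l (F i) y) (iterd E l (F i) x)) <= eps.
Proof.
  intros hx eps heps. destruct (local_equicont x hx) as [r [hr [hc H]]].
  destruct (H eps heps) as [dl [hdl H1]]. pose proof (pos_INR d).
  set (rho := Rmin r (dl / (INR d + 1))).
  assert (hrho : rho > 0) by (apply Rmin_pos; auto; apply Rdiv_lt_0_compat; lra).
  assert (hsub : forall y, cube d x rho y -> cube d x r y)
    by (intros y hy; eapply cube_le; [apply Rmin_l| exact hy]).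
  exists rho. split; [auto| split; [intros; apply hc, hsub; auto|]].
  intros l i y hl hy. apply H1; auto; [apply cube_center; auto; apply inRd_of; auto|].
  rewrite distC. apply cube_in_ball; [apply inRd_of; auto| auto|].
  eapply cube_le; [apply Rmin_r| exact hy].
Qed.

Lemma diff_quot_est x : O x -> forall eps, eps > 0 -> exists rho, rho > 0 /\
  (forall y, cube d x rho y -> O y) /\ forall n l t i, admissible d k (n :: l) -> t <> 0 ->
    Rabs t < rho ->
    bnorm (bsub (bscal (/ t) (bsub (iterd E l (F i) (shift n t x)) (iterd E l (F i) x)))
       (iterd E (n :: l) (F i) x)) <= eps.
Proof.
  intros hx eps heps. destruct (equicont_at x hx eps heps) as [rho [hr [hc H]]].
  exists rho. split; [auto| split; [auto|]]. intros n l t i hl ht htr.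
  pose proof (admissible_head _ _ _ _ hl) as hn. pose proof (admissible_tail _ _ _ _ hl) as hl'.
  rewrite bnorm_scal_quot, Rabs_inv by auto.
  assert (bnorm (bsub (bsub (iterd E l (F i) (shift n t x)) (iterd E l (F i) x))
     (bscal t (iterd E (n :: l) (F i) x))) <= eps * Rabs t).
  { apply mean_value_segment with (w := fun s => iterd E (n :: l) (F i) (shift n s x)).
    intros s hs. apply between0_abs in hs.
    assert (cube d x rho (shift n s x)) by (apply cube_shift_center; auto; [apply inRd_of|]; auto; lra).
    split; [|apply H; auto].
    apply pdP, (proj1 (hCk i)); [apply hl'| destruct hl; simpl in *; lia| auto| apply hc; auto]. }
  assert (0 < Rabs t) by (apply Rabs_pos_lt; auto).
  apply Rmult_le_reg_l with (Rabs t); auto. rewrite <- Rmult_assoc, Rinv_r, Rmult_1_l by lra. lra.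
Qed.


Lemma cauchy_iterd_spread (U : (nat -> R) -> Prop) : dense_in d O U ->
  forall l, admissible d k l -> (forall u, U u -> net_cauchy I le (fun i => iterd E l (F i) u)) ->
  forall x, O x -> net_cauchy I le (fun i => iterd E l (F i) x).
Proof.
  intros [hUO hU] l hl hc x hx e he.
  destruct (equicont_at x hx (e/3)) as [rho [hr [hcO H]]]; [lra|].
  destruct (hU x hx rho hr) as [u [hu hxu]].
  assert (hcu : cube d x rho u) by (apply cube_of_dist; auto; apply inRd_of, hUO; auto).
  destruct (hc u hu (e/3)) as [i0 h0]; [lra|]. exists i0. intros i j hi hj.
  specialize (h0 i j hi hj). pose proof (H l i u hl hcu). pose proof (H l j u hl hcu).
  pose proof (bnorm_sub_tri (iterd E l (F i) x) (iterd E l (F i) u) (iterd E l (F j) x)).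
  pose proof (bnorm_sub_tri (iterd E l (F i) u) (iterd E l (F j) u) (iterd E l (F j) x)).
  rewrite (bnorm_subC (iterd E l (F i) x) (iterd E l (F i) u)) in H2. lra.
Qed.

Section PointwiseCauchy.
Hypothesis hcauchy : forall x, O x -> net_cauchy I le (fun i => F i x).

(* A difference quotient with a fixed step is Cauchy, and it uniformly approximates the derivative. *)
Lemma cauchy_iterd l : admissible d k l -> forall x, O x ->
  net_cauchy I le (fun i => iterd E l (F i) x).
Proof.
  induction l as [|n l IH]; intros hl x hx; [apply hcauchy; auto|]. intros e he.
  destruct (diff_quot_est x hx (e/3)) as [rho [hr [hc Hd]]]; [lra|].
  pose proof (admissible_head _ _ _ _ hl) as hn. pose proof (admissible_tail _ _ _ _ hl) as hl'.
  set (t := rho / 2). assert (ht : 0 < t) by (unfold t; lra).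
  assert (htr : Rabs t < rho) by (rewrite Rabs_right; unfold t; lra).
  assert (hxt : O (shift n t x)) by (apply hc, cube_shift_center; auto; apply inRd_of; auto).
  set (eta := e * t / 6). assert (heta : eta > 0) by (unfold eta; nra).
  destruct (IH hl' _ hxt eta heta) as [i1 h1]. destruct (IH hl' _ hx eta heta) as [i2 h2].
  destruct (directed_tail2 hd i1 i2) as [i0 H0]. exists i0. intros i j hi hj.
  destruct (H0 i hi) as [hi1 hi2], (H0 j hj) as [hj1 hj2].
  set (Q := fun i => bscal (/ t) (bsub (iterd E l (F i) (shift n t x)) (iterd E l (F i) x))).
  assert (hQi := Hd n l t i hl ltac:(lra) htr). assert (hQj := Hd n l t j hl ltac:(lra) htr).
  fold (Q i) in hQi. fold (Q j) in hQj.
  assert (hQ : bnorm (bsub (Q i) (Q j)) < e / 3).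
  { unfold Q. rewrite <- bscal_subr, bnorm_scal, bsubACA.
    pose proof (h1 i j hi1 hj1). pose proof (h2 i j hi2 hj2).
    pose proof (bnorm_sub_le (bsub (iterd E l (F i) (shift n t x)) (iterd E l (F j) (shift n t x)))
                             (bsub (iterd E l (F i) x) (iterd E l (F j) x))).
    rewrite Rabs_right by (left; apply Rinv_0_lt_compat; lra).
    apply Rmult_lt_reg_l with t; auto. rewrite <- Rmult_assoc, Rinv_r, Rmult_1_l by lra.
    unfold eta in *. lra. }
  pose proof (bnorm_sub_tri (iterd E (n :: l) (F i) x) (Q i) (iterd E (n :: l) (F j) x)) as T1.
  pose proof (bnorm_sub_tri (Q i) (Q j) (iterd E (n :: l) (F j) x)) as T2.
  rewrite (bnorm_subC _ (Q i)) in T1. lra.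
Qed.

(* The limit of the [l]-th derivatives (a junk value where the limit does not exist). *)
Definition lim_iterd l x : E :=
  epsilon (inhabits bzero) (net_lim E I le (fun i => iterd E l (F i) x)).

Lemma lim_iterdP l x : admissible d k l -> O x ->
  net_lim E I le (fun i => iterd E l (F i) x) (lim_iterd l x).
Proof. intros hl hx. unfold lim_iterd. apply epsilon_spec, (net_complete hd), cauchy_iterd; auto. Qed.

Lemma lim_iterd_le l x M : admissible d k l -> O x ->
  (forall i, bnorm (iterd E l (F i) x) <= M) -> bnorm (lim_iterd l x) <= M.
Proof. intros. eapply (net_lim_le hd); [apply lim_iterdP|]; auto. Qed.

Lemma lim_iterd_sub_le l x y M : admissible d k l -> O x -> O y ->
  (forall i, bnorm (bsub (iterd E l (F i) x) (iterd E l (F i) y)) <= M) ->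
  bnorm (bsub (lim_iterd l x) (lim_iterd l y)) <= M.
Proof. intros. eapply (net_lim_le hd); [apply (net_lim_sub hd); apply lim_iterdP|]; auto. Qed.

Lemma is_pderiv_lim_iterd n l x : admissible d k (n :: l) -> O x ->
  is_pderiv E n (lim_iterd l) x (lim_iterd (n :: l) x).
Proof.
  intros hl hx e he. destruct (diff_quot_est x hx (e/2)) as [rho [hr [hc Hd]]]; [lra|].
  pose proof (admissible_head _ _ _ _ hl) as hn. pose proof (admissible_tail _ _ _ _ hl) as hl'.
  exists rho. split; auto. intros t ht htr.
  assert (hxt : O (shift n t x)) by (apply hc, cube_shift_center; auto; apply inRd_of; auto).
  assert (NL := net_lim_sub hd _ _ _ _
    (net_lim_scal _ _ (/ t) (net_lim_sub hd _ _ _ _ (lim_iterdP l _ hl' hxt) (lim_iterdP l x hl' hx)))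
    (lim_iterdP (n :: l) x hl hx)).
  assert (bnorm (bsub (bscal (/ t) (bsub (lim_iterd l (shift n t x)) (lim_iterd l x)))
                      (lim_iterd (n :: l) x)) <= e/2); [|lra].
  eapply (net_lim_le hd); [exact NL|]. intro i. apply Hd; auto.
Qed.

Lemma iterd_lim l : admissible d k l -> forall y, O y -> iterd E l (lim_iterd nil) y = lim_iterd l y.
Proof.
  induction l as [|n l IH]; intros hl y hy; [reflexivity|]. simpl.
  pose proof (admissible_head _ _ _ _ hl) as hn. pose proof (admissible_tail _ _ _ _ hl) as hl'.
  transitivity (pd E n (lim_iterd l) y); [apply pd_local with d O; auto|].
  apply pd_eq, is_pderiv_lim_iterd; auto.
Qed.

Lemma Ck_lim : Ck E d O k (lim_iterd nil).
Proof.
  split.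
  - intros l hl hk n hn x hx. exists (lim_iterd (n :: l) x).
    assert (hl' : admissible d k l) by (split; auto; lia).
    apply is_pderiv_local with d O (lim_iterd l); auto.
    + intros; symmetry; apply iterd_lim; auto.
    + apply is_pderiv_lim_iterd; auto. apply admissible_cons; auto.
  - intros l hl hk x hx e he.
    destruct (equicont_at x hx (e/2)) as [rho [hr [hc H]]]; [lra|].
    exists rho. split; auto. intros y hy hdist.
    rewrite !iterd_lim by (try split; auto).
    assert (bnorm (bsub (lim_iterd l y) (lim_iterd l x)) <= e/2); [|lra].
    apply lim_iterd_sub_le; try split; auto. intro i. apply H; [split; auto|].
    apply cube_of_dist; auto. apply inRd_of; auto.
Qed.

Lemma holder_lim K : compact_in d O K -> exists M, holder_bound E d k gamma K (lim_iterd nil) M.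
Proof.
  intros hK. destruct (proj2 hB K hK) as [M hM]. exists M. destruct hK as [_ hKO]. split.
  - intros beta x hbk hx. pose proof (mlist_admissible d k beta hbk) as hv.
    unfold dpart. rewrite iterd_lim by auto.
    apply lim_iterd_le; auto. intro i. apply (proj1 (hM i)); auto.
  - intros beta x y hbk hx hy hne. pose proof (mlist_admissible d k beta ltac:(lia)) as hv.
    unfold dpart. rewrite !iterd_lim by auto.
    assert (hP : 0 < Rpower (dist d x y) gamma) by apply exp_pos.
    unfold Rdiv. apply Rmult_le_reg_r with (Rpower (dist d x y) gamma); auto.
    rewrite Rmult_assoc, Rinv_l, Rmult_1_r by lra.
    apply lim_iterd_sub_le; auto. intro i. pose proof (proj2 (hM i) beta x y hbk hx hy hne).
    unfold dpart, Rdiv in H. apply Rmult_le_reg_r with (/ Rpower (dist d x y) gamma);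
      [apply Rinv_0_lt_compat; auto|]. rewrite Rmult_assoc, Rinv_r, Rmult_1_r by lra. lra.
Qed.


(* Cover [K] by finitely many cubes on which the whole net, and hence the limit, oscillates by at
   most [eps/3]; at the finitely many centres the net converges. *)
Lemma uniform_lim_on_compact K : compact_in d O K -> forall eps, eps > 0 ->
  exists i0, forall i, le i0 i -> forall l y, admissible d k l -> K y ->
    bnorm (bsub (iterd E l (F i) y) (lim_iterd l y)) <= eps.
Proof.
  intros [[hKd hKcov] hKO] eps heps. set (e3 := eps / 3). assert (he3 : e3 > 0) by (unfold e3; lra).
  set (Prho := fun x rho => rho > 0 /\ (forall y, cube d x rho y -> O y) /\
     forall l i y, admissible d k l -> cube d x rho y ->
       bnorm (bsub (iterd E l (F i) y) (iterd E l (F i) x)) <= e3).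
  set (rf := fun x => epsilon (inhabits 1) (Prho x)).
  assert (hrf : forall x, O x -> Prho x (rf x))
    by (intros x hx; apply epsilon_spec, equicont_at; auto).
  destruct (hKcov (nat -> R) (fun x y => K x /\ cube d x (rf x) y)) as [Lp hLp].
  { intros x y [hx hy]. destruct (cube_open d x (rf x) y hy) as [hyd [r [hr H]]].
    split; [auto|]. exists r. split; [auto|]. intros z hz hdz. split; [exact hx| apply H; auto]. }
  { intros y hy. exists y. split; auto. apply cube_center; auto. apply (hrf y (hKO y hy)). }
  destruct (directed_tail_list hd (list_prod Lp (admissible_lists d k))
     (fun p i => K (fst p) -> admissible d k (snd p) -> forall i', le i i' ->
        bnorm (bsub (iterd E (snd p) (F i') (fst p)) (lim_iterd (snd p) (fst p))) <= e3))
    as [i0 hi0].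
  { intros p i j h hij hk hv i' hi'. apply h; auto. eapply directed_trans; eauto. }
  { intros [x l] _. simpl. destruct (classic (K x /\ admissible d k l)) as [[hx hl]|hn].
    - destruct (lim_iterdP l x hl (hKO x hx) e3 he3) as [i1 h1].
      exists i1. intros _ _ i' hi'. left. apply h1; auto.
    - destruct (directed_inhabited hd) as [i1 _]. exists i1. intros hx hl. exfalso; auto. }
  exists i0. intros i hi l y hl hy. destruct (hLp y hy) as [x [hxL [hx hxy]]].
  destruct (hrf x (hKO x hx)) as [_ [_ H]].
  assert (h1 := hi0 (x, l) ltac:(apply in_prod; auto; apply admissible_listsP; auto) hx hl i hi).
  assert (h2 := H l i y hl hxy).
  assert (h3 : bnorm (bsub (lim_iterd l y) (lim_iterd l x)) <= e3)
    by (apply lim_iterd_sub_le; auto; intro j; apply H; auto).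
  simpl in h1.
  pose proof (bnorm_sub_tri (iterd E l (F i) y) (iterd E l (F i) x) (lim_iterd l y)).
  pose proof (bnorm_sub_tri (iterd E l (F i) x) (lim_iterd l x) (lim_iterd l y)).
  rewrite (bnorm_subC (lim_iterd l x)) in H1. unfold e3 in *. lra.
Qed.

Lemma conv_lim : conv_Ck E d O k I le F (lim_iterd nil).
Proof.
  intros K hK eps heps. destruct (uniform_lim_on_compact K hK eps heps) as [i0 hi0].
  exists i0. intros i hi beta y hbk hy.
  pose proof (mlist_admissible d k beta hbk) as hl. pose proof (proj2 hK y hy) as hyO.
  unfold dpart. rewrite (iterd_sub d O k hO (F i) (lim_iterd nil) (hCk i) Ck_lim _ hl y hyO).
  rewrite iterd_lim by auto. apply hi0; auto.
Qed.

End PointwiseCauchy.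


Section DerivativeCauchy.
Hypotheses (hk : (1 <= k)%nat)
  (hder : forall n x, (n < d)%nat -> O x -> net_cauchy I le (fun i => pd E n (F i) x)).

Lemma diff_step_est i j p m h eta : (m < d)%nat ->
  (forall s, between0 h s -> O (shift m s p)) ->
  (forall i s, between0 h s -> bnorm (bsub (pd E m (F i) (shift m s p)) (pd E m (F i) p)) <= eta) ->
  bnorm (bsub (pd E m (F i) p) (pd E m (F j) p)) < eta ->
  bnorm (bsub (bsub (F i (shift m h p)) (F j (shift m h p))) (bsub (F i p) (F j p)))
    <= 3 * eta * Rabs h.
Proof.
  intros hm hO' hosc hc. set (c := bsub (pd E m (F i) p) (pd E m (F j) p)).
  assert (HM : bnorm (bsub (bsub (bsub (F i (shift m h p)) (F j (shift m h p))) (bsub (F i p) (F j p)))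
                 (bscal h c)) <= 2 * eta * Rabs h).
  { apply mean_value_segment
      with (g := fun z => bsub (F i z) (F j z))
           (w := fun s => bsub (pd E m (F i) (shift m s p)) (pd E m (F j) (shift m s p))).
    intros s hs. split.
    - apply is_pderiv_sub; apply pdP, (proj1 (hCk _) nil); simpl; auto; lia.
    - unfold c. rewrite bsubACA. eapply Rle_trans; [apply bnorm_sub_le|].
      pose proof (hosc i s hs). pose proof (hosc j s hs). lra. }
  pose proof (bnorm_le_sub (bsub (bsub (F i (shift m h p)) (F j (shift m h p))) (bsub (F i p) (F j p)))
                (bscal h c)).
  rewrite bnorm_scal in H. pose proof (Rabs_pos h). fold c in hc. nra.
Qed.

(* Split the segment into [N+1] steps shorter than the equicontinuity radius of the first
   derivatives, and use convergence of [pd m (F i)] at the finitely many grid points. *)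
Lemma cauchy_diff_segment x0 r : (forall y, cube d x0 r y -> O y) -> equicont_on_cube x0 r ->
  forall q m t, (m < d)%nat -> (forall s, between0 t s -> cube d x0 r (shift m s q)) ->
  forall eps, eps > 0 -> exists i0, forall i j, le i0 i -> le i0 j ->
    bnorm (bsub (bsub (F i (shift m t q)) (F j (shift m t q))) (bsub (F i q) (F j q))) <= eps.
Proof.
  intros hcO hEQ q m t hm hseg eps heps. pose proof (Rabs_pos t) as hta.
  set (eta := eps / (3 * (Rabs t + 1))).
  assert (heta : eta > 0) by (unfold eta; apply Rdiv_lt_0_compat; lra).
  destruct (hEQ eta heta) as [dl [hdl Hdl]].
  destruct (inv_INR_small (dl / (Rabs t + 1))) as [N hN]; [apply Rdiv_lt_0_compat; lra|].
  pose proof (pos_INR N) as hNp. set (h := t / (INR N + 1)).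
  assert (hh : Rabs h < dl).
  { unfold h. rewrite Rabs_grid_step. unfold Rdiv at 1.
    assert (dl = (dl / (Rabs t + 1)) * (Rabs t + 1)) by (field; lra).
    assert (0 < / (INR N + 1)) by (apply Rinv_0_lt_compat; lra).
    set (a := dl / (Rabs t + 1)) in *. nra. }
  set (g := fun n : nat => shift m (INR n * h) q).
  assert (hpts : forall n s, (n <= N)%nat -> between0 h s -> cube d x0 r (shift m s (g n)))
    by (intros; unfold g; rewrite shift_shift; apply hseg, between0_grid; auto).
  destruct (directed_tail_list hd (seq 0 (S N))
     (fun n i0 => forall i j, le i0 i -> le i0 j ->
        bnorm (bsub (pd E m (F i) (g n)) (pd E m (F j) (g n))) < eta)) as [i0 hi0].
  { intros n i j H hij i' j' h1 h2. apply H; eapply directed_trans; eauto. }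
  { intros n hn. apply in_seq in hn. apply hder; auto. apply hcO.
    rewrite <- (shift0 m (g n)). apply hpts; [lia| apply between0_0]. }
  exists i0. intros i j hi hj. set (D := fun z => bsub (F i z) (F j z)).
  assert (chain := bnorm_telescope (fun n => D (g n)) (3 * eta * Rabs h) (S N)).
  cbv beta in chain.
  replace (g 0%nat) with q in chain by (unfold g; simpl; rewrite Rmult_0_l; symmetry; apply shift0).
  replace (g (S N)) with (shift m t q) in chain by (unfold g, h; f_equal; rewrite S_INR; field; lra).
  eapply Rle_trans; [apply chain|].
  - intros n hn. replace (g (S n)) with (shift m h (g n))
      by (unfold g; rewrite shift_shift, S_INR; f_equal; ring).
    apply (diff_step_est i j (g n) m h eta hm).
    + intros s hs. apply hcO, hpts; auto. lia.
    + intros i' s hs. apply (Hdl (m :: nil) i'); [split; simpl; auto; lia| apply hpts; auto; lia|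
        rewrite <- (shift0 m (g n)); apply hpts; [lia| apply between0_0]|].
      rewrite distC, dist_shift by auto. apply between0_abs in hs. lra.
    + apply (hi0 n); auto. apply in_seq. lia.
  - unfold h. rewrite Rabs_grid_step, S_INR.
    replace ((INR N + 1) * (3 * eta * (Rabs t / (INR N + 1)))) with (3 * eta * Rabs t)
      by (field; lra).
    assert (eps = eta * (3 * (Rabs t + 1))) by (unfold eta; field; lra). nra.
Qed.

Lemma cauchy_diff_cube x : O x -> exists r, r > 0 /\ forall y, cube d x r y -> O y /\
  forall eps, eps > 0 -> exists i0, forall i j, le i0 i -> le i0 j ->
    bnorm (bsub (bsub (F i y) (F j y)) (bsub (F i x) (F j x))) <= eps.
Proof.
  intro hx. pose proof (inRd_of x hx) as hxd.
  destruct (local_equicont x hx) as [r [hr [hc hEQ]]].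
  exists r. split; auto. intros y hy. split; auto.
  assert (Hp : forall p, (p <= d)%nat -> forall eps, eps > 0 -> exists i0, forall i j,
    le i0 i -> le i0 j -> bnorm (bsub (bsub (F i (coord_path p x y)) (F j (coord_path p x y)))
                                      (bsub (F i x) (F j x))) <= eps).
  { induction p; intros hp eps heps.
    - destruct (directed_inhabited hd) as [i0 _]. exists i0. intros.
      rewrite coord_path0, bsubxx, bnorm0. lra.
    - destruct (IHp ltac:(lia) (eps/2)) as [i1 h1]; [lra|].
      assert (hseg : forall s, between0 (y p - x p) s -> cube d x r (shift p s (coord_path p x y)))
        by (intros s hs; apply coord_path_step_cube; [lia| apply cube_center| exact hy| exact hs]; auto).
      destruct (cauchy_diff_segment x r hc hEQ _ p _ ltac:(lia) hseg (eps/2)) as [i2 h2]; [lra|].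
      destruct (directed_tail2 hd i1 i2) as [i0 H]. exists i0. intros i j hi hj.
      destruct (H i hi), (H j hj). specialize (h1 i j H0 H2). specialize (h2 i j H1 H3).
      rewrite coord_pathS.
      eapply Rle_trans; [apply (bnorm_sub_tri _ (bsub (F i (coord_path p x y)) (F j (coord_path p x y))))|].
      lra. }
  intros eps heps. destruct (Hp d (Nat.le_refl d) eps heps) as [i0 h0]. exists i0.
  rewrite coord_path_end in h0; auto. apply hy.
Qed.

End DerivativeCauchy.


Lemma pointwise_cauchy_of_derivatives : (1 <= k)%nat -> connectedRd d O ->
  (exists U, dense_in d O U /\ forall n x, (n < d)%nat -> U x ->
     exists L, net_lim E I le (fun i => pd E n (F i) x) L) ->
  (exists x0, O x0 /\ exists L, net_lim E I le (fun i => F i x0) L) ->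
  forall x, O x -> net_cauchy I le (fun i => F i x).
Proof.
  intros hk hconn [U [hU hUL]] [x0 [hx0 [L0 hL0]]].
  assert (hder : forall n x, (n < d)%nat -> O x -> net_cauchy I le (fun i => pd E n (F i) x)).
  { intros n x hn hx. apply (cauchy_iterd_spread U hU (n :: nil)); auto.
    - split; [constructor; auto| simpl; lia].
    - intros u hu. destruct (hUL n u hn hu) as [L h]. eapply net_lim_cauchy; eauto. }
  intros x hx. apply (connected_locally_constant d O (fun z => net_cauchy I le (fun i => F i z)))
    with x0; auto; [|eapply net_lim_cauchy; eauto].
  intros z hz. destruct (cauchy_diff_cube hk hder z hz) as [r [hr H]].
  exists r. split; auto. intros y hy. destruct (H y hy) as [hyO Hy]. split; auto.
  split; apply (net_cauchy_transfer hd); auto.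
  intros eps heps. destruct (Hy eps heps) as [i0 h0]. exists i0. intros i j hi hj.
  rewrite bnorm_subC. auto.
Qed.

Lemma limit_of_pointwise_cauchy : (forall x, O x -> net_cauchy I le (fun i => F i x)) ->
  exists f, Ckg_loc E d O k gamma f /\ conv_Ck E d O k I le F f.
Proof.
  intro hc. exists (lim_iterd nil).
  split; [split; [apply Ck_lim| apply holder_lim]| apply conv_lim]; auto.
Qed.

End BoundedNet.

Theorem mainTheorem15 (E : Banach) (d : nat) (Om : (nat -> R) -> Prop) (k : nat) (gamma : R)
  (I : Type) (le : I -> I -> Prop) (F : I -> (nat -> R) -> E) :
  openRd d Om -> 0 < gamma -> gamma <= 1 ->
  directed I le ->
  bounded_net E d Om k gamma I F ->
  ((exists U, dense_in d Om U /\
      forall x, U x -> exists L, net_lim E I le (fun i => F i x) L)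
   \/
   ((1 <= k)%nat /\ connectedRd d Om /\
    (exists U, dense_in d Om U /\
      forall n x, (n < d)%nat -> U x ->
        exists L, net_lim E I le (fun i => pd E n (F i) x) L) /\
    (exists x0, Om x0 /\ exists L, net_lim E I le (fun i => F i x0) L))) ->
  exists f, Ckg_loc E d Om k gamma f /\ conv_Ck E d Om k I le F f.
Proof.
  intros hO hg _ hd hB hcase. apply limit_of_pointwise_cauchy; auto.
  destruct hcase as [[U [hU hUL]] | [hk [hconn [hU hx0]]]].
  - apply (cauchy_iterd_spread E d Om k gamma I le F hO hg hB U hU nil);
      [split; simpl; auto; lia|].
    intros u hu. destruct (hUL u hu) as [L h]. eapply net_lim_cauchy; eauto.
  - apply (pointwise_cauchy_of_derivatives E d Om k gamma I le F); auto.
Qed.
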